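(* There exists an $\mathrm{mcDSQS}(v)$ for each $v\in\{20,26,32\}$.
   Context: A Steiner triple system $\mathrm{STS}(v)$ is a pair $(X,\mathcal{B})$ with $|X|=v$ and $\mathcal{B}$ a set of $3$-subsets (blocks) such that every $2$-subset of $X$ lies in exactly one block. A Steiner quadruple system $\mathrm{SQS}(v)$ is $(X,\mathcal{B})$ with $\mathcal{B}$ a set of $4$-subsets such that every $3$-subset lies in exactly one block; its derived design at $x$ is the $\mathrm{STS}(v-1)$ $(X\setminus\{x\},\{B\setminus\{x\}:x\in B\in\mathcal{B}\})$. A partial parallel class (PPC) of a set $Y$ is a collection of pairwise disjoint blocks contained in $Y$; an $r$-coloring of a design is a partition of its block set into $r$ PPCs of its point set. The chromatic index $\chi'(v)$ is the minimum over all $\mathrm{STS}(v)$ of the least $r$ admitting an $r$-coloring (for $v\equiv 1\pmod 6$, $v\ge 19$, it equals $\frac{v+1}{2}$). An $\mathrm{STS}(v)$ with a $\chi'(v)$-coloring is minimum colorable ($\mathrm{mcSTS}(v)$). An $\mathrm{mcDSQS}(v)$ is an $\mathrm{SQS}(v)$ whose derived design at every point is an $\mathrm{mcSTS}(v-1)$. *)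

From mathcomp Require Import all_boot.
Set Implicit Arguments. Unset Strict Implicit. Unset Printing Implicit Defensive.

Definition is_STS (T : finType) (X : {set T}) (B : {set {set T}}) : Prop :=
  (forall b, b \in B -> b \subset X /\ #|b| = 3) /\
  (forall p : {set T}, p \subset X -> #|p| = 2 ->
     exists! b, b \in B /\ p \subset b).

Definition is_SQS (T : finType) (X : {set T}) (B : {set {set T}}) : Prop :=
  (forall b, b \in B -> b \subset X /\ #|b| = 4) /\
  (forall p : {set T}, p \subset X -> #|p| = 3 ->
     exists! b, b \in B /\ p \subset b).

Definition derived (T : finType) (B : {set {set T}}) (x : T) : {set {set T}} :=
  [set b :\ x | b in B & x \in b].

(* An r-coloring: a partition of the block set into r partial parallel
   classes (color classes of pairwise disjoint blocks); empty classes allowed. *)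
Definition colorable (T : finType) (B : {set {set T}}) (r : nat) : Prop :=
  exists c : {set T} -> 'I_r,
    forall b1 b2, b1 \in B -> b2 \in B -> b1 != b2 -> c b1 = c b2 ->
      [disjoint b1 & b2].

Definition sts_r_colorable (v r : nat) : Prop :=
  exists B : {set {set 'I_v}}, is_STS [set: 'I_v] B /\ colorable B r.

Definition chromatic_index (v r : nat) : Prop :=
  sts_r_colorable v r /\ (forall r', sts_r_colorable v r' -> r <= r').

Definition mcSTS (T : finType) (X : {set T}) (B : {set {set T}}) : Prop :=
  is_STS X B /\ exists r, chromatic_index #|X| r /\ colorable B r.

Definition mcDSQS (v : nat) (B : {set {set 'I_v}}) : Prop :=
  is_SQS [set: 'I_v] B /\ forall x : 'I_v, mcSTS ([set: 'I_v] :\ x) (derived B x).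

From mathcomp Require Import all_boot all_order.
Set Implicit Arguments. Unset Strict Implicit. Unset Printing Implicit Defensive.

(* Each SQS(v) is given explicitly by its blocks, together with, for every point x, a
   colouring of the derived STS(v-1) at x with v/2 colours (10, 13 and 16).  This is optimal:
   an STS(w) has w(w-1)/6 blocks and a colour class holds at most floor(w/3) of them, which
   for w = 19, 25, 31 forces at least v/2 colours.  The derived design at the last point,
   read as an STS on {0, ..., v-2}, attains this bound, so v/2 is chi'(v-1).  The Steiner
   property is checked by computation: k-sets form an S(t,k,n) iff the multiset of their
   t-subsets is exactly the set of t-subsets of {0, ..., n-1}, which is decided by sorting. *)

Definition steiner_system (t k : nat) (T : finType) (X : {set T}) (B : {set {set T}}) :
    Prop :=
  (forall b, b \in B -> b \subset X /\ #|b| = k) /\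
  (forall p : {set T}, p \subset X -> #|p| = t -> exists! b, b \in B /\ p \subset b).

Lemma card_steiner t k (T : finType) (X : {set T}) (B : {set {set T}}) :
  steiner_system t k X B -> 'C(k, t) * #|B| = 'C(#|X|, t).
Proof.
case=> Bk Bcover; set D := [set p : {set T} | p \subset X & #|p| == t].
have block_draws b : b \in B -> 'C(k, t) = \sum_(p in D) (p \subset b : nat).
  move=> bB; have [bX <-] := Bk b bB.
  rewrite -cards_draws -sum1_card [LHS]big_mkcond [RHS]big_mkcond.
  apply: eq_bigr => p _; rewrite !inE.
  by case pb: (p \subset b); rewrite /= ?(subset_trans pb bX) ?if_same.
rewrite mulnC -sum_nat_const (eq_bigr _ block_draws) exchange_big /=.
rewrite -cards_draws -sum1_card; apply: eq_bigr => p; rewrite inE => /andP [pX /eqP pt].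
have [b0 [[b0B pb0] b0_uniq]] := Bcover p pX pt.
rewrite (bigD1 b0) //= pb0 big1 // => b /andP [bB nb0].
by apply/eqP; rewrite eqb0; apply: contra nb0 => pb; rewrite (b0_uniq b).
Qed.

Lemma derived_steiner t k (T : finType) (X : {set T}) (B : {set {set T}}) x :
  x \in X -> steiner_system t.+1 k.+1 X B -> steiner_system t k (X :\ x) (derived B x).
Proof.
move=> xX [Bk Bcover]; split.
  move=> b' /imsetP [b]; rewrite inE => /andP [bB xb] ->.
  have [bX bk] := Bk b bB; split; first by rewrite setSD.
  by move: bk; rewrite (cardsD1 x b) xb => -[].
move=> p; rewrite subsetD1 => /andP [pX xp] pt.
have xpX : x |: p \subset X by rewrite subUset sub1set xX pX.
have xpt : #|x |: p| = t.+1 by rewrite cardsU1 xp pt.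
have [b [[bB xpb] b_uniq]] := Bcover _ xpX xpt.
move: (xpb); rewrite subUset sub1set => /andP [xb pb].
exists (b :\ x); split.
  by split; [apply/imsetP; exists b; rewrite ?inE ?bB | rewrite subsetD1 pb].
move=> c' [/imsetP [c]]; rewrite inE => /andP [cB xc] -> pc.
congr (_ :\ x); apply: b_uniq; split => //.
by rewrite subUset sub1set xc (subset_trans pc) ?subD1set.
Qed.

Lemma card_colorable_le k r (T : finType) (X : {set T}) (B : {set {set T}}) :
  0 < k -> (forall b, b \in B -> b \subset X /\ #|b| = k) -> colorable B r ->
  #|B| <= r * (#|X| %/ k).
Proof.
move=> k_gt0 Bk [c c_disj].
rewrite -sum1_card (partition_big c predT) //= -[r in r * _]card_ord -sum_nat_const.
apply: leq_sum => i _; set C := [set b in B | c b == i].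
rewrite (eq_bigl (mem C)) => [|b]; last by rewrite !inE.
rewrite sum1_card leq_divRL //.
have CB : {subset C <= B} by move=> b; rewrite inE => /andP [].
have -> : #|C| * k = \sum_(b in C) #|b|.
  by rewrite -sum_nat_const; apply: eq_bigr => b /CB /Bk [_ ->].
have /eqP -> : trivIset C.
  apply/trivIsetP => b1 b2; rewrite !inE => /andP [b1B /eqP c1] /andP [b2B /eqP c2] ne.
  by apply: c_disj; rewrite ?c1 ?c2.
by apply: subset_leq_card; apply/bigcupsP => b /CB /Bk [].
Qed.

Lemma chromatic_index_of_bound n r :
  sts_r_colorable n r.+1 -> 3 * (r * (n %/ 3)) < 'C(n, 2) -> chromatic_index n r.+1.
Proof.
move=> colorable_r bound; split=> // r' [B [SB colorable_r']].
have := card_steiner SB; rewrite cardsT card_ord => card_B.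
rewrite ltnNge; apply: contraL bound => le_r'r; rewrite -leqNgt -card_B leq_mul2l /=.
apply: leq_trans (card_colorable_le _ (proj1 SB) colorable_r') _ => //.
by rewrite cardsT card_ord leq_mul2r le_r'r orbT.
Qed.

Fixpoint ksubseqs {T : Type} (k : nat) (s : seq T) : seq (seq T) :=
  match k, s with
  | 0, _ => [:: [::]]
  | _, [::] => [::]
  | k'.+1, x :: s' => map (cons x) (ksubseqs k' s') ++ ksubseqs k s'
  end.

Lemma mem_ksubseqs (T : eqType) k (s u : seq T) :
  (u \in ksubseqs k s) = subseq u s && (size u == k).
Proof.
elim: s k u => [|x s IHs] [|k] [|y u] //=; rewrite ?inE ?andbF // mem_cat IHs.
  by rewrite /= andbF orbF; apply/mapP => -[].
case: (eqVneq y x) => [->|y_neq_x].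
  rewrite mem_map ?IHs ?eqSS; last by move=> ? ? [].
  by apply/orb_idr => /andP [/cons_subseq ->].
by case: mapP => // -[v _ [/eqP]]; rewrite (negbTE y_neq_x).
Qed.

Lemma ksubseqs_uniq (T : eqType) k (s : seq T) : uniq s -> uniq (ksubseqs k s).
Proof.
elim: s k => [|x s IHs] [|k] //= /andP [x_notin_s s_uniq].
rewrite cat_uniq map_inj_uniq ?IHs ?andbT //=; last by move=> ? ? [].
apply/hasPn => u; rewrite mem_ksubseqs => /andP [u_sub _]; apply/mapP => -[v _ uv].
by move: x_notin_s; rewrite (mem_subseq u_sub) // uv inE eqxx.
Qed.

Lemma sorted_subseqP (T : eqType) (leT : rel T) (s l : seq T) :
  irreflexive leT -> transitive leT -> sorted leT s -> sorted leT l ->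
  reflect {subset s <= l} (subseq s l).
Proof.
move=> leT_irr leT_tr s_sorted l_sorted; apply: (iffP idP) => [/mem_subseq // | sl].
suff -> : s = filter (mem s) l by exact: filter_subseq.
apply: (irr_sorted_eq leT_tr leT_irr) => //; first exact: sorted_filter.
by move=> a; rewrite mem_filter; apply/esym/andb_idr/sl.
Qed.

Lemma count_eq1_eq (T : eqType) (P : pred T) (s : seq T) x y :
  count P s = 1 -> x \in s -> y \in s -> P x -> P y -> x = y.
Proof.
move=> /eqP count1 xs ys Px Py; apply/eqP; apply: contraTT count1 => x_neq_y.
rewrite -size_filter; apply/negbT/gtn_eqF.
apply: (uniq_leq_size (s1 := [:: x; y])) => [|z]; first by rewrite /= inE x_neq_y.
by rewrite !inE mem_filter => /orP [] /eqP ->; apply/andP.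
Qed.

Section Certificates.

Variable n : nat.

Definition set_of_seq (l : seq nat) : {set 'I_n} := [set i : 'I_n | val i \in l].

Definition seq_of_set (p : {set 'I_n}) : seq nat := sort leq [seq val i | i in p].

Lemma card_set_of_seq l : uniq l -> all (fun a => a < n) l -> #|set_of_seq l| = size l.
Proof.
move=> l_uniq; rewrite all_count => /eqP l_lt_n.
have -> : set_of_seq l = [set:: pmap insub l].
  by apply/setP => i; rewrite !inE mem_pmap_sub.
have /card_uniqP : uniq (pmap insub l : seq 'I_n) by exact: pmap_sub_uniq.
by rewrite cardsE size_pmap_sub => ->.
Qed.

Lemma seq_of_set_sorted (p : {set 'I_n}) : sorted ltn (seq_of_set p).
Proof.
rewrite ltn_sorted_uniq_leq sort_uniq (sort_sorted leq_total) andbT.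
by rewrite map_inj_uniq ?enum_uniq //; apply: val_inj.
Qed.

Lemma subset_set_of_seq (p : {set 'I_n}) l :
  sorted ltn l -> (p \subset set_of_seq l) = subseq (seq_of_set p) l.
Proof.
move=> l_sorted; apply/subsetP/(sorted_subseqP ltnn ltn_trans (seq_of_set_sorted p) l_sorted).
  move=> pl a; rewrite mem_sort => /imageP [i ip ->].
  by have := pl i ip; rewrite inE.
by move=> pl i ip; rewrite inE pl // mem_sort (mem_image val_inj).
Qed.

Lemma seq_of_set_ksubseqs (p : {set 'I_n}) : seq_of_set p \in ksubseqs #|p| (iota 0 n).
Proof.
rewrite mem_ksubseqs size_sort size_image eqxx andbT.
apply/(sorted_subseqP ltnn ltn_trans (seq_of_set_sorted p) (iota_ltn_sorted 0 n)).
by move=> a; rewrite mem_sort => /imageP [i _ ->]; rewrite mem_iota ltn_ord.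
Qed.

Definition blocks_of (bl : seq (seq nat)) : {set {set 'I_n}} := [set:: map set_of_seq bl].

(* Any sorting relation makes the check sound; the lexicographic one is the order in which
   [ksubseqs] enumerates, so that the check can succeed. *)
Definition steiner_cert t k (bl : seq (seq nat)) : bool :=
  all (fun l => [&& sorted ltn l, all (fun a => a < n) l & size l == k]) bl &&
  (sort (<=%O : rel (seqlexi nat)) (flatten [seq ksubseqs t l | l <- bl])
     == ksubseqs t (iota 0 n)).

Lemma steiner_cert_count t k bl : steiner_cert t k bl ->
  forall s, s \in ksubseqs t (iota 0 n) -> count (subseq s) bl = 1.
Proof.
case/andP => /allP bl_ok /eqP cert s s_t.
have bl_uniq l : l \in bl -> uniq l.
  by case/bl_ok/and3P => /(sorted_uniq ltn_trans ltnn).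
have perm_cert : perm_eq (flatten [seq ksubseqs t l | l <- bl]) (ksubseqs t (iota 0 n)).
  by rewrite -cert perm_sym perm_sort.
have count_s : count_mem s (ksubseqs t (iota 0 n)) = 1.
  by rewrite count_uniq_mem ?ksubseqs_uniq ?iota_uniq // s_t.
have s_size : size s == t by move: s_t; rewrite mem_ksubseqs => /andP [].
rewrite -count_s -(permP perm_cert) count_flatten -map_comp -sumn_count.
congr sumn; apply/eq_in_map => l /bl_uniq l_uniq /=.
by rewrite count_uniq_mem ?ksubseqs_uniq // mem_ksubseqs s_size andbT.
Qed.

Lemma steiner_of_cert t k bl :
  steiner_cert t k bl -> steiner_system t k [set: 'I_n] (blocks_of bl).
Proof.
move=> cert; have /andP [/allP bl_ok _] := cert; split.
  move=> _ /[!inE] /mapP [l /bl_ok /and3P [l_sorted l_lt_n /eqP l_k] ->].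
  by rewrite subsetT card_set_of_seq // (sorted_uniq ltn_trans ltnn).
move=> p _ p_t; set s := seq_of_set p.
have count_s : count (subseq s) bl = 1.
  by apply: steiner_cert_count cert _ _; rewrite -p_t seq_of_set_ksubseqs.
have [l l_bl s_l] : exists2 l, l \in bl & subseq s l by apply/hasP; rewrite has_count count_s.
have sorted_bl l' : l' \in bl -> sorted ltn l' by case/bl_ok/and3P.
exists (set_of_seq l); split.
  by rewrite inE map_f // subset_set_of_seq ?sorted_bl.
move=> _ [/[!inE] /mapP [l' l'_bl ->]]; rewrite subset_set_of_seq ?sorted_bl // => s_l'.
by rewrite (count_eq1_eq count_s l_bl l'_bl s_l s_l').
Qed.

Definition coloring_cert r (bl : seq (seq nat)) (cols : seq nat) : bool :=
  [&& size cols == size bl, all (fun c => c < r) cols &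
      pairwise (fun p q : seq nat * nat => (p.2 == q.2) ==> ~~ has (mem q.1) p.1)
        (zip bl cols)].

Lemma colorable_of_cert r bl cols :
  coloring_cert r.+1 bl cols -> colorable (blocks_of bl) r.+1.
Proof.
case/and3P => /eqP size_cols /allP cols_lt /(pairwiseP ([::], 0)) cols_ok.
pose idx b := index b (map set_of_seq bl).
exists (fun b => inord (nth 0 cols (idx b))).
have idx_lt b : b \in map set_of_seq bl -> idx b < size bl.
  by rewrite -index_mem size_map.
have idxK b : b \in map set_of_seq bl -> set_of_seq (nth [::] bl (idx b)) = b.
  by move=> bB; rewrite -(nth_map _ (set_of_seq [::])) ?idx_lt // nth_index.
have col_lt b : b \in map set_of_seq bl -> nth 0 cols (idx b) < r.+1.
  by move=> bB; rewrite cols_lt // mem_nth // size_cols idx_lt.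
have disj i j : i < j < size bl -> nth 0 cols i = nth 0 cols j ->
    [disjoint set_of_seq (nth [::] bl i) & set_of_seq (nth [::] bl j)].
  case/andP => lt_ij lt_j c_ij.
  have := cols_ok i j; rewrite !inE size_zip -size_cols minnn.
  rewrite !nth_zip ?size_cols //= c_ij eqxx.
  move=> /(_ (ltn_trans lt_ij lt_j) lt_j lt_ij) /hasPn dis.
  by apply/pred0P => a /=; rewrite !inE; apply/negbTE/andP => -[/dis /negP].
move=> b1 b2; rewrite !inE => b1B b2B b1_neq_b2.
move=> /(congr1 val) /=; rewrite !inordK ?col_lt // => c12.
rewrite -(idxK _ b1B) -(idxK _ b2B).
case: (ltngtP (idx b1) (idx b2)) => [lt12|lt21|eq12].
- by apply: disj; rewrite ?lt12 ?idx_lt.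
- by rewrite disjoint_sym; apply: disj; rewrite ?lt21 ?idx_lt.
- by move: b1_neq_b2; rewrite -(idxK _ b1B) -(idxK _ b2B) eq12 eqxx.
Qed.

Definition derived_seq (x : nat) (bl : seq (seq nat)) : seq (seq nat) :=
  [seq filter (predC1 x) l | l <- bl & x \in l].

Lemma derived_blocks_of bl (x : 'I_n) :
  derived (blocks_of bl) x = blocks_of (derived_seq x bl).
Proof.
have set_of_filter (l : seq nat) :
    set_of_seq (filter (predC1 (x : nat)) l) = set_of_seq l :\ x.
  by apply/setP => i; rewrite !inE mem_filter /= val_eqE andbC.
apply/setP => b; rewrite [RHS]inE; apply/imsetP/mapP => [[c]|[l]].
  rewrite !inE => /andP [/mapP [l l_bl ->]]; rewrite inE => x_l ->.
  exists (filter (predC1 (x : nat)) l); last by rewrite set_of_filter.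
  by rewrite map_f // mem_filter l_bl x_l.
case/mapP => l0; rewrite mem_filter => /andP [x_l0 l0_bl] -> ->.
exists (set_of_seq l0); last by rewrite set_of_filter.
by rewrite !inE map_f.
Qed.

End Certificates.

Definition mcDSQS_cert n r (bl colss : seq (seq nat)) : bool :=
  [&& steiner_cert n.+1 3 4 bl, steiner_cert n 2 3 (derived_seq n bl),
      all (fun x => coloring_cert r.+1 (derived_seq x bl) (nth [::] colss x)) (iota 0 n.+1) &
      3 * (r * (n %/ 3)) < 'C(n, 2)].

Lemma mcDSQS_of_cert n r bl colss : mcDSQS_cert n r bl colss -> mcDSQS (blocks_of n.+1 bl).
Proof.
case/and4P => sqs sts /allP colss_ok bound.
have chi : chromatic_index n r.+1.
  apply: chromatic_index_of_bound bound.
  exists (blocks_of n (derived_seq n bl)); split; first exact: steiner_of_cert sts.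
  by apply: colorable_of_cert (colss_ok n _); rewrite mem_iota add0n ltnSn.
have SQS := steiner_of_cert sqs; split => // x.
split; first by apply: derived_steiner; rewrite ?inE.
exists r.+1; rewrite setTD cardsC1 card_ord derived_blocks_of; split => //.
by apply: colorable_of_cert (colss_ok x _); rewrite mem_iota ltn_ord.
Qed.

Definition sqs20_blocks : seq (seq nat) := [::
  [:: 0; 1; 2; 12]; [:: 0; 1; 3; 4]; [:: 0; 1; 5; 9]; [:: 0; 1; 6; 7]; [:: 0; 1; 8; 13];
  [:: 0; 1; 10; 16]; [:: 0; 1; 11; 19]; [:: 0; 1; 14; 15]; [:: 0; 1; 17; 18]; [:: 0; 2; 3; 19];
  [:: 0; 2; 4; 9]; [:: 0; 2; 5; 17]; [:: 0; 2; 6; 15]; [:: 0; 2; 7; 18]; [:: 0; 2; 8; 16];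
  [:: 0; 2; 10; 13]; [:: 0; 2; 11; 14]; [:: 0; 3; 5; 8]; [:: 0; 3; 6; 16]; [:: 0; 3; 7; 14];
  [:: 0; 3; 9; 11]; [:: 0; 3; 10; 12]; [:: 0; 3; 13; 17]; [:: 0; 3; 15; 18]; [:: 0; 4; 5; 14];
  [:: 0; 4; 6; 12]; [:: 0; 4; 7; 10]; [:: 0; 4; 8; 19]; [:: 0; 4; 11; 17]; [:: 0; 4; 13; 18];
  [:: 0; 4; 15; 16]; [:: 0; 5; 6; 19]; [:: 0; 5; 7; 11]; [:: 0; 5; 10; 15]; [:: 0; 5; 12; 13];
  [:: 0; 5; 16; 18]; [:: 0; 6; 8; 17]; [:: 0; 6; 9; 13]; [:: 0; 6; 10; 11]; [:: 0; 6; 14; 18];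
  [:: 0; 7; 8; 15]; [:: 0; 7; 9; 17]; [:: 0; 7; 12; 19]; [:: 0; 7; 13; 16]; [:: 0; 8; 9; 10];
  [:: 0; 8; 11; 18]; [:: 0; 8; 12; 14]; [:: 0; 9; 12; 18]; [:: 0; 9; 14; 16];
  [:: 0; 9; 15; 19]; [:: 0; 10; 14; 17]; [:: 0; 10; 18; 19]; [:: 0; 11; 12; 16];
  [:: 0; 11; 13; 15]; [:: 0; 12; 15; 17]; [:: 0; 13; 14; 19]; [:: 0; 16; 17; 19];
  [:: 1; 2; 3; 13]; [:: 1; 2; 4; 5]; [:: 1; 2; 6; 10]; [:: 1; 2; 7; 8]; [:: 1; 2; 9; 14];
  [:: 1; 2; 11; 17]; [:: 1; 2; 15; 16]; [:: 1; 2; 18; 19]; [:: 1; 3; 5; 10]; [:: 1; 3; 6; 18];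
  [:: 1; 3; 7; 16]; [:: 1; 3; 8; 19]; [:: 1; 3; 9; 17]; [:: 1; 3; 11; 14]; [:: 1; 3; 12; 15];
  [:: 1; 4; 6; 9]; [:: 1; 4; 7; 17]; [:: 1; 4; 8; 15]; [:: 1; 4; 10; 12]; [:: 1; 4; 11; 13];
  [:: 1; 4; 14; 18]; [:: 1; 4; 16; 19]; [:: 1; 5; 6; 15]; [:: 1; 5; 7; 13]; [:: 1; 5; 8; 11];
  [:: 1; 5; 12; 18]; [:: 1; 5; 14; 19]; [:: 1; 5; 16; 17]; [:: 1; 6; 8; 12]; [:: 1; 6; 11; 16];
  [:: 1; 6; 13; 14]; [:: 1; 6; 17; 19]; [:: 1; 7; 9; 18]; [:: 1; 7; 10; 14]; [:: 1; 7; 11; 12];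
  [:: 1; 7; 15; 19]; [:: 1; 8; 9; 16]; [:: 1; 8; 10; 18]; [:: 1; 8; 14; 17]; [:: 1; 9; 10; 11];
  [:: 1; 9; 12; 19]; [:: 1; 9; 13; 15]; [:: 1; 10; 13; 19]; [:: 1; 10; 15; 17];
  [:: 1; 11; 15; 18]; [:: 1; 12; 13; 17]; [:: 1; 12; 14; 16]; [:: 1; 13; 16; 18];
  [:: 2; 3; 4; 14]; [:: 2; 3; 5; 6]; [:: 2; 3; 7; 11]; [:: 2; 3; 8; 9]; [:: 2; 3; 10; 15];
  [:: 2; 3; 12; 18]; [:: 2; 3; 16; 17]; [:: 2; 4; 6; 11]; [:: 2; 4; 7; 19]; [:: 2; 4; 8; 17];
  [:: 2; 4; 10; 18]; [:: 2; 4; 12; 15]; [:: 2; 4; 13; 16]; [:: 2; 5; 7; 10]; [:: 2; 5; 8; 18];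
  [:: 2; 5; 9; 16]; [:: 2; 5; 11; 13]; [:: 2; 5; 12; 14]; [:: 2; 5; 15; 19]; [:: 2; 6; 7; 16];
  [:: 2; 6; 8; 14]; [:: 2; 6; 9; 12]; [:: 2; 6; 13; 19]; [:: 2; 6; 17; 18]; [:: 2; 7; 9; 13];
  [:: 2; 7; 12; 17]; [:: 2; 7; 14; 15]; [:: 2; 8; 10; 19]; [:: 2; 8; 11; 15];
  [:: 2; 8; 12; 13]; [:: 2; 9; 10; 17]; [:: 2; 9; 11; 19]; [:: 2; 9; 15; 18];
  [:: 2; 10; 11; 12]; [:: 2; 10; 14; 16]; [:: 2; 11; 16; 18]; [:: 2; 12; 16; 19];
  [:: 2; 13; 14; 18]; [:: 2; 13; 15; 17]; [:: 2; 14; 17; 19]; [:: 3; 4; 5; 15];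
  [:: 3; 4; 6; 7]; [:: 3; 4; 8; 12]; [:: 3; 4; 9; 10]; [:: 3; 4; 11; 16]; [:: 3; 4; 13; 19];
  [:: 3; 4; 17; 18]; [:: 3; 5; 7; 12]; [:: 3; 5; 9; 18]; [:: 3; 5; 11; 19]; [:: 3; 5; 13; 16];
  [:: 3; 5; 14; 17]; [:: 3; 6; 8; 11]; [:: 3; 6; 9; 19]; [:: 3; 6; 10; 17]; [:: 3; 6; 12; 14];
  [:: 3; 6; 13; 15]; [:: 3; 7; 8; 17]; [:: 3; 7; 9; 15]; [:: 3; 7; 10; 13]; [:: 3; 7; 18; 19];
  [:: 3; 8; 10; 14]; [:: 3; 8; 13; 18]; [:: 3; 8; 15; 16]; [:: 3; 9; 12; 16];
  [:: 3; 9; 13; 14]; [:: 3; 10; 11; 18]; [:: 3; 10; 16; 19]; [:: 3; 11; 12; 13];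
  [:: 3; 11; 15; 17]; [:: 3; 12; 17; 19]; [:: 3; 14; 15; 19]; [:: 3; 14; 16; 18];
  [:: 4; 5; 6; 16]; [:: 4; 5; 7; 8]; [:: 4; 5; 9; 13]; [:: 4; 5; 10; 11]; [:: 4; 5; 12; 17];
  [:: 4; 5; 18; 19]; [:: 4; 6; 8; 13]; [:: 4; 6; 10; 19]; [:: 4; 6; 14; 17]; [:: 4; 6; 15; 18];
  [:: 4; 7; 9; 12]; [:: 4; 7; 11; 18]; [:: 4; 7; 13; 15]; [:: 4; 7; 14; 16]; [:: 4; 8; 9; 18];
  [:: 4; 8; 10; 16]; [:: 4; 8; 11; 14]; [:: 4; 9; 11; 15]; [:: 4; 9; 14; 19];
  [:: 4; 9; 16; 17]; [:: 4; 10; 13; 17]; [:: 4; 10; 14; 15]; [:: 4; 11; 12; 19];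
  [:: 4; 12; 13; 14]; [:: 4; 12; 16; 18]; [:: 4; 15; 17; 19]; [:: 5; 6; 7; 17];
  [:: 5; 6; 8; 9]; [:: 5; 6; 10; 14]; [:: 5; 6; 11; 12]; [:: 5; 6; 13; 18]; [:: 5; 7; 9; 14];
  [:: 5; 7; 15; 18]; [:: 5; 7; 16; 19]; [:: 5; 8; 10; 13]; [:: 5; 8; 12; 19];
  [:: 5; 8; 14; 16]; [:: 5; 8; 15; 17]; [:: 5; 9; 10; 19]; [:: 5; 9; 11; 17];
  [:: 5; 9; 12; 15]; [:: 5; 10; 12; 16]; [:: 5; 10; 17; 18]; [:: 5; 11; 14; 18];
  [:: 5; 11; 15; 16]; [:: 5; 13; 14; 15]; [:: 5; 13; 17; 19]; [:: 6; 7; 8; 18];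
  [:: 6; 7; 9; 10]; [:: 6; 7; 11; 15]; [:: 6; 7; 12; 13]; [:: 6; 7; 14; 19]; [:: 6; 8; 10; 15];
  [:: 6; 8; 16; 19]; [:: 6; 9; 11; 14]; [:: 6; 9; 15; 17]; [:: 6; 9; 16; 18];
  [:: 6; 10; 12; 18]; [:: 6; 10; 13; 16]; [:: 6; 11; 13; 17]; [:: 6; 11; 18; 19];
  [:: 6; 12; 15; 19]; [:: 6; 12; 16; 17]; [:: 6; 14; 15; 16]; [:: 7; 8; 9; 19];
  [:: 7; 8; 10; 11]; [:: 7; 8; 12; 16]; [:: 7; 8; 13; 14]; [:: 7; 9; 11; 16];
  [:: 7; 10; 12; 15]; [:: 7; 10; 16; 18]; [:: 7; 10; 17; 19]; [:: 7; 11; 13; 19];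
  [:: 7; 11; 14; 17]; [:: 7; 12; 14; 18]; [:: 7; 13; 17; 18]; [:: 7; 15; 16; 17];
  [:: 8; 9; 11; 12]; [:: 8; 9; 13; 17]; [:: 8; 9; 14; 15]; [:: 8; 10; 12; 17];
  [:: 8; 11; 13; 16]; [:: 8; 11; 17; 19]; [:: 8; 12; 15; 18]; [:: 8; 13; 15; 19];
  [:: 8; 14; 18; 19]; [:: 8; 16; 17; 18]; [:: 9; 10; 12; 13]; [:: 9; 10; 14; 18];
  [:: 9; 10; 15; 16]; [:: 9; 11; 13; 18]; [:: 9; 12; 14; 17]; [:: 9; 13; 16; 19];
  [:: 9; 17; 18; 19]; [:: 10; 11; 13; 14]; [:: 10; 11; 15; 19]; [:: 10; 11; 16; 17];
  [:: 10; 12; 14; 19]; [:: 10; 13; 15; 18]; [:: 11; 12; 14; 15]; [:: 11; 12; 17; 18];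
  [:: 11; 14; 16; 19]; [:: 12; 13; 15; 16]; [:: 12; 13; 18; 19]; [:: 13; 14; 16; 17];
  [:: 14; 15; 17; 18]; [:: 15; 16; 18; 19]].

Definition sqs20_colorings : seq (seq nat) := [::
  [:: 9; 4; 5; 1; 6; 2; 0; 8; 3; 7; 2; 4; 6; 5; 1; 8; 3; 3; 5; 2; 8; 6; 9; 0; 6; 3; 0; 5; 1; 7;
      9; 2; 9; 1; 0; 8; 8; 4; 7; 9; 4; 7; 8; 3; 9; 2; 7; 1; 0; 3; 5; 4; 4; 5; 2; 1; 6];
  [:: 0; 7; 5; 2; 8; 3; 4; 1; 6; 9; 4; 5; 1; 6; 2; 8; 3; 2; 4; 6; 5; 1; 8; 3; 3; 5; 2; 8; 6; 9;
      0; 6; 3; 0; 1; 7; 9; 9; 1; 0; 8; 8; 4; 7; 9; 4; 7; 3; 9; 2; 7; 1; 0; 5; 4; 5; 2];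
  [:: 4; 3; 5; 0; 7; 8; 9; 2; 1; 0; 7; 5; 2; 8; 3; 1; 6; 9; 4; 5; 1; 6; 2; 8; 2; 4; 6; 1; 8; 3;
      3; 5; 2; 8; 6; 9; 6; 3; 0; 1; 9; 9; 1; 0; 8; 4; 7; 4; 7; 3; 9; 7; 0; 5; 4; 5; 2];
  [:: 3; 6; 4; 9; 1; 8; 7; 5; 2; 4; 5; 0; 7; 8; 9; 2; 1; 0; 7; 5; 2; 8; 3; 1; 9; 4; 5; 1; 6; 2;
      8; 2; 6; 1; 8; 3; 3; 5; 2; 8; 6; 6; 3; 0; 9; 9; 1; 0; 4; 7; 4; 3; 9; 7; 0; 4; 5];
  [:: 6; 8; 2; 1; 5; 9; 3; 0; 4; 3; 4; 9; 1; 8; 7; 5; 2; 4; 5; 0; 7; 9; 2; 1; 0; 7; 5; 2; 8; 3;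
      1; 9; 4; 5; 1; 6; 8; 2; 6; 8; 3; 3; 2; 8; 6; 6; 3; 0; 9; 1; 0; 4; 7; 4; 9; 7; 5];
  [:: 9; 2; 0; 3; 8; 6; 1; 4; 5; 6; 8; 2; 1; 5; 3; 0; 4; 3; 4; 9; 1; 8; 7; 5; 4; 5; 7; 9; 2; 1;
      0; 7; 5; 2; 8; 1; 9; 4; 5; 1; 6; 2; 8; 3; 3; 2; 8; 6; 6; 3; 0; 9; 0; 4; 7; 9; 7];
  [:: 8; 0; 5; 9; 1; 3; 2; 6; 7; 9; 2; 0; 3; 6; 1; 4; 5; 6; 8; 2; 1; 5; 3; 4; 3; 4; 9; 1; 8; 7;
      4; 5; 7; 2; 1; 0; 7; 5; 2; 8; 9; 4; 5; 1; 6; 2; 8; 3; 8; 6; 3; 0; 9; 0; 4; 7; 9];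
  [:: 1; 5; 3; 9; 7; 6; 8; 0; 4; 8; 0; 5; 9; 3; 2; 6; 7; 9; 2; 0; 3; 6; 1; 4; 6; 8; 2; 1; 5; 4;
      3; 4; 1; 8; 7; 4; 5; 2; 1; 0; 7; 5; 2; 8; 9; 4; 5; 1; 2; 3; 8; 6; 3; 0; 9; 7; 9];
  [:: 0; 7; 2; 4; 1; 8; 9; 6; 3; 1; 5; 3; 9; 7; 6; 8; 4; 8; 0; 5; 9; 3; 2; 6; 9; 0; 3; 6; 1; 4;
      6; 8; 2; 1; 5; 3; 4; 1; 8; 7; 4; 5; 2; 0; 7; 5; 2; 4; 5; 1; 2; 3; 8; 0; 9; 7; 9];
  [:: 4; 5; 3; 1; 2; 0; 8; 9; 7; 0; 7; 2; 1; 8; 9; 6; 3; 1; 3; 9; 7; 6; 8; 4; 8; 0; 5; 9; 2; 6;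
      9; 0; 3; 6; 1; 4; 6; 8; 2; 1; 5; 3; 4; 8; 7; 4; 5; 7; 5; 2; 4; 5; 1; 2; 3; 0; 9];
  [:: 7; 6; 8; 5; 1; 2; 4; 0; 9; 4; 5; 3; 1; 2; 0; 8; 9; 0; 7; 2; 1; 8; 9; 3; 1; 3; 9; 7; 6; 4;
      8; 0; 9; 2; 6; 9; 0; 3; 6; 4; 6; 8; 1; 5; 3; 4; 8; 7; 5; 7; 5; 2; 4; 5; 1; 2; 3];
  [:: 9; 8; 1; 4; 0; 3; 7; 5; 2; 7; 6; 8; 5; 1; 2; 4; 0; 4; 5; 3; 1; 2; 0; 9; 0; 7; 2; 8; 9; 3;
      1; 3; 9; 7; 6; 8; 9; 2; 6; 9; 0; 6; 4; 6; 8; 1; 5; 3; 4; 8; 5; 7; 5; 2; 4; 1; 3];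
  [:: 9; 2; 7; 6; 4; 1; 8; 5; 3; 8; 1; 4; 0; 3; 7; 5; 2; 7; 6; 8; 5; 1; 2; 4; 0; 4; 5; 3; 1; 0;
      9; 0; 2; 8; 9; 3; 1; 3; 9; 7; 8; 9; 2; 6; 9; 0; 6; 6; 8; 5; 3; 4; 5; 7; 2; 4; 1];
  [:: 4; 7; 0; 9; 8; 3; 2; 5; 1; 9; 2; 7; 6; 1; 8; 5; 3; 8; 1; 4; 0; 3; 5; 2; 7; 6; 8; 5; 1; 2;
      4; 4; 5; 3; 1; 0; 0; 2; 9; 3; 1; 9; 7; 8; 9; 6; 9; 0; 6; 6; 8; 5; 3; 4; 7; 2; 4];
  [:: 1; 8; 4; 7; 3; 9; 6; 5; 2; 4; 7; 0; 9; 8; 3; 2; 5; 9; 2; 7; 6; 1; 5; 3; 8; 1; 0; 3; 5; 2;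
      6; 8; 5; 1; 2; 4; 4; 5; 3; 1; 0; 0; 2; 9; 1; 9; 7; 8; 6; 9; 0; 6; 8; 3; 4; 7; 4];
  [:: 2; 9; 3; 5; 1; 0; 6; 8; 4; 1; 8; 4; 7; 3; 9; 6; 5; 4; 7; 0; 8; 3; 2; 5; 9; 2; 7; 6; 1; 5;
      8; 1; 0; 3; 2; 6; 8; 5; 2; 4; 4; 5; 3; 1; 0; 2; 9; 1; 9; 7; 8; 9; 0; 6; 3; 7; 4];
  [:: 6; 3; 0; 5; 2; 1; 7; 9; 4; 2; 9; 3; 5; 1; 0; 8; 4; 1; 8; 4; 7; 9; 6; 5; 4; 7; 8; 3; 2; 5;
      9; 2; 7; 6; 1; 8; 1; 0; 3; 6; 8; 5; 2; 4; 4; 5; 3; 0; 2; 9; 1; 9; 8; 0; 6; 3; 7];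
  [:: 4; 3; 5; 2; 8; 6; 9; 0; 7; 6; 3; 0; 5; 2; 1; 7; 9; 2; 9; 5; 1; 0; 8; 4; 1; 8; 4; 7; 9; 6;
      4; 7; 8; 3; 5; 9; 2; 7; 6; 1; 1; 0; 3; 8; 5; 2; 4; 4; 5; 3; 0; 2; 9; 1; 8; 6; 3];
  [:: 7; 2; 4; 6; 5; 1; 8; 3; 9; 4; 3; 5; 2; 8; 6; 9; 0; 6; 3; 0; 5; 1; 7; 9; 2; 9; 5; 1; 0; 8;
      1; 8; 4; 7; 9; 4; 7; 8; 3; 9; 2; 7; 6; 1; 0; 3; 5; 2; 4; 4; 5; 0; 2; 1; 8; 6; 3];
  [:: 9; 4; 5; 1; 6; 2; 0; 8; 3; 7; 2; 4; 6; 5; 1; 8; 3; 3; 5; 2; 8; 6; 9; 0; 6; 3; 0; 5; 1; 7;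
      9; 2; 9; 1; 0; 8; 8; 4; 7; 9; 4; 7; 8; 3; 9; 2; 7; 1; 0; 3; 5; 4; 4; 5; 2; 1; 6]].

Definition sqs26_blocks : seq (seq nat) := [::
  [:: 0; 1; 2; 23]; [:: 0; 1; 3; 15]; [:: 0; 1; 4; 20]; [:: 0; 1; 5; 10]; [:: 0; 1; 6; 8];
  [:: 0; 1; 7; 12]; [:: 0; 1; 9; 24]; [:: 0; 1; 11; 17]; [:: 0; 1; 13; 18]; [:: 0; 1; 14; 16];
  [:: 0; 1; 19; 21]; [:: 0; 1; 22; 25]; [:: 0; 2; 3; 11]; [:: 0; 2; 4; 19]; [:: 0; 2; 5; 16];
  [:: 0; 2; 6; 18]; [:: 0; 2; 7; 8]; [:: 0; 2; 9; 15]; [:: 0; 2; 10; 22]; [:: 0; 2; 12; 13];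
  [:: 0; 2; 14; 25]; [:: 0; 2; 17; 24]; [:: 0; 2; 20; 21]; [:: 0; 3; 4; 5]; [:: 0; 3; 6; 12];
  [:: 0; 3; 7; 21]; [:: 0; 3; 8; 18]; [:: 0; 3; 9; 23]; [:: 0; 3; 10; 17]; [:: 0; 3; 13; 22];
  [:: 0; 3; 14; 24]; [:: 0; 3; 16; 20]; [:: 0; 3; 19; 25]; [:: 0; 4; 6; 14]; [:: 0; 4; 7; 17];
  [:: 0; 4; 8; 15]; [:: 0; 4; 9; 25]; [:: 0; 4; 10; 13]; [:: 0; 4; 11; 22]; [:: 0; 4; 12; 21];
  [:: 0; 4; 16; 24]; [:: 0; 4; 18; 23]; [:: 0; 5; 6; 24]; [:: 0; 5; 7; 25]; [:: 0; 5; 8; 12];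
  [:: 0; 5; 9; 17]; [:: 0; 5; 11; 18]; [:: 0; 5; 13; 14]; [:: 0; 5; 15; 23]; [:: 0; 5; 19; 20];
  [:: 0; 5; 21; 22]; [:: 0; 6; 7; 10]; [:: 0; 6; 9; 22]; [:: 0; 6; 11; 25]; [:: 0; 6; 13; 21];
  [:: 0; 6; 15; 16]; [:: 0; 6; 17; 19]; [:: 0; 6; 20; 23]; [:: 0; 7; 9; 11]; [:: 0; 7; 13; 24];
  [:: 0; 7; 14; 23]; [:: 0; 7; 15; 20]; [:: 0; 7; 16; 19]; [:: 0; 7; 18; 22]; [:: 0; 8; 9; 21];
  [:: 0; 8; 10; 14]; [:: 0; 8; 11; 16]; [:: 0; 8; 13; 19]; [:: 0; 8; 17; 22];
  [:: 0; 8; 20; 24]; [:: 0; 8; 23; 25]; [:: 0; 9; 10; 20]; [:: 0; 9; 12; 19];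
  [:: 0; 9; 13; 16]; [:: 0; 9; 14; 18]; [:: 0; 10; 11; 24]; [:: 0; 10; 12; 15];
  [:: 0; 10; 16; 25]; [:: 0; 10; 18; 21]; [:: 0; 10; 19; 23]; [:: 0; 11; 12; 14];
  [:: 0; 11; 13; 20]; [:: 0; 11; 15; 19]; [:: 0; 11; 21; 23]; [:: 0; 12; 16; 18];
  [:: 0; 12; 17; 25]; [:: 0; 12; 20; 22]; [:: 0; 12; 23; 24]; [:: 0; 13; 15; 25];
  [:: 0; 13; 17; 23]; [:: 0; 14; 15; 21]; [:: 0; 14; 17; 20]; [:: 0; 14; 19; 22];
  [:: 0; 15; 17; 18]; [:: 0; 15; 22; 24]; [:: 0; 16; 17; 21]; [:: 0; 16; 22; 23];
  [:: 0; 18; 19; 24]; [:: 0; 18; 20; 25]; [:: 0; 21; 24; 25]; [:: 1; 2; 3; 24];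
  [:: 1; 2; 4; 16]; [:: 1; 2; 5; 21]; [:: 1; 2; 6; 11]; [:: 1; 2; 7; 9]; [:: 1; 2; 8; 13];
  [:: 1; 2; 10; 25]; [:: 1; 2; 12; 18]; [:: 1; 2; 14; 19]; [:: 1; 2; 15; 17];
  [:: 1; 2; 20; 22]; [:: 1; 3; 4; 12]; [:: 1; 3; 5; 20]; [:: 1; 3; 6; 17]; [:: 1; 3; 7; 19];
  [:: 1; 3; 8; 9]; [:: 1; 3; 10; 16]; [:: 1; 3; 11; 23]; [:: 1; 3; 13; 14]; [:: 1; 3; 18; 25];
  [:: 1; 3; 21; 22]; [:: 1; 4; 5; 6]; [:: 1; 4; 7; 13]; [:: 1; 4; 8; 22]; [:: 1; 4; 9; 19];
  [:: 1; 4; 10; 24]; [:: 1; 4; 11; 18]; [:: 1; 4; 14; 23]; [:: 1; 4; 15; 25];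
  [:: 1; 4; 17; 21]; [:: 1; 5; 7; 15]; [:: 1; 5; 8; 18]; [:: 1; 5; 9; 16]; [:: 1; 5; 11; 14];
  [:: 1; 5; 12; 23]; [:: 1; 5; 13; 22]; [:: 1; 5; 17; 25]; [:: 1; 5; 19; 24]; [:: 1; 6; 7; 25];
  [:: 1; 6; 9; 13]; [:: 1; 6; 10; 18]; [:: 1; 6; 12; 19]; [:: 1; 6; 14; 15]; [:: 1; 6; 16; 24];
  [:: 1; 6; 20; 21]; [:: 1; 6; 22; 23]; [:: 1; 7; 8; 11]; [:: 1; 7; 10; 23]; [:: 1; 7; 14; 22];
  [:: 1; 7; 16; 17]; [:: 1; 7; 18; 20]; [:: 1; 7; 21; 24]; [:: 1; 8; 10; 12];
  [:: 1; 8; 14; 25]; [:: 1; 8; 15; 24]; [:: 1; 8; 16; 21]; [:: 1; 8; 17; 20];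
  [:: 1; 8; 19; 23]; [:: 1; 9; 10; 22]; [:: 1; 9; 11; 15]; [:: 1; 9; 12; 17];
  [:: 1; 9; 14; 20]; [:: 1; 9; 18; 23]; [:: 1; 9; 21; 25]; [:: 1; 10; 11; 21];
  [:: 1; 10; 13; 20]; [:: 1; 10; 14; 17]; [:: 1; 10; 15; 19]; [:: 1; 11; 12; 25];
  [:: 1; 11; 13; 16]; [:: 1; 11; 19; 22]; [:: 1; 11; 20; 24]; [:: 1; 12; 13; 15];
  [:: 1; 12; 14; 21]; [:: 1; 12; 16; 20]; [:: 1; 12; 22; 24]; [:: 1; 13; 17; 19];
  [:: 1; 13; 21; 23]; [:: 1; 13; 24; 25]; [:: 1; 14; 18; 24]; [:: 1; 15; 16; 22];
  [:: 1; 15; 18; 21]; [:: 1; 15; 20; 23]; [:: 1; 16; 18; 19]; [:: 1; 16; 23; 25];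
  [:: 1; 17; 18; 22]; [:: 1; 17; 23; 24]; [:: 1; 19; 20; 25]; [:: 2; 3; 4; 25];
  [:: 2; 3; 5; 17]; [:: 2; 3; 6; 22]; [:: 2; 3; 7; 12]; [:: 2; 3; 8; 10]; [:: 2; 3; 9; 14];
  [:: 2; 3; 13; 19]; [:: 2; 3; 15; 20]; [:: 2; 3; 16; 18]; [:: 2; 3; 21; 23]; [:: 2; 4; 5; 13];
  [:: 2; 4; 6; 21]; [:: 2; 4; 7; 18]; [:: 2; 4; 8; 20]; [:: 2; 4; 9; 10]; [:: 2; 4; 11; 17];
  [:: 2; 4; 12; 24]; [:: 2; 4; 14; 15]; [:: 2; 4; 22; 23]; [:: 2; 5; 6; 7]; [:: 2; 5; 8; 14];
  [:: 2; 5; 9; 23]; [:: 2; 5; 10; 20]; [:: 2; 5; 11; 25]; [:: 2; 5; 12; 19]; [:: 2; 5; 15; 24];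
  [:: 2; 5; 18; 22]; [:: 2; 6; 8; 16]; [:: 2; 6; 9; 19]; [:: 2; 6; 10; 17]; [:: 2; 6; 12; 15];
  [:: 2; 6; 13; 24]; [:: 2; 6; 14; 23]; [:: 2; 6; 20; 25]; [:: 2; 7; 10; 14];
  [:: 2; 7; 11; 19]; [:: 2; 7; 13; 20]; [:: 2; 7; 15; 16]; [:: 2; 7; 17; 25];
  [:: 2; 7; 21; 22]; [:: 2; 7; 23; 24]; [:: 2; 8; 9; 12]; [:: 2; 8; 11; 24]; [:: 2; 8; 15; 23];
  [:: 2; 8; 17; 18]; [:: 2; 8; 19; 21]; [:: 2; 8; 22; 25]; [:: 2; 9; 11; 13];
  [:: 2; 9; 16; 25]; [:: 2; 9; 17; 22]; [:: 2; 9; 18; 21]; [:: 2; 9; 20; 24];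
  [:: 2; 10; 11; 23]; [:: 2; 10; 12; 16]; [:: 2; 10; 13; 18]; [:: 2; 10; 15; 21];
  [:: 2; 10; 19; 24]; [:: 2; 11; 12; 22]; [:: 2; 11; 14; 21]; [:: 2; 11; 15; 18];
  [:: 2; 11; 16; 20]; [:: 2; 12; 14; 17]; [:: 2; 12; 20; 23]; [:: 2; 12; 21; 25];
  [:: 2; 13; 14; 16]; [:: 2; 13; 15; 22]; [:: 2; 13; 17; 21]; [:: 2; 13; 23; 25];
  [:: 2; 14; 18; 20]; [:: 2; 14; 22; 24]; [:: 2; 15; 19; 25]; [:: 2; 16; 17; 23];
  [:: 2; 16; 19; 22]; [:: 2; 16; 21; 24]; [:: 2; 17; 19; 20]; [:: 2; 18; 19; 23];
  [:: 2; 18; 24; 25]; [:: 3; 4; 6; 18]; [:: 3; 4; 7; 23]; [:: 3; 4; 8; 13]; [:: 3; 4; 9; 11];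
  [:: 3; 4; 10; 15]; [:: 3; 4; 14; 20]; [:: 3; 4; 16; 21]; [:: 3; 4; 17; 19];
  [:: 3; 4; 22; 24]; [:: 3; 5; 6; 14]; [:: 3; 5; 7; 22]; [:: 3; 5; 8; 19]; [:: 3; 5; 9; 21];
  [:: 3; 5; 10; 11]; [:: 3; 5; 12; 18]; [:: 3; 5; 13; 25]; [:: 3; 5; 15; 16];
  [:: 3; 5; 23; 24]; [:: 3; 6; 7; 8]; [:: 3; 6; 9; 15]; [:: 3; 6; 10; 24]; [:: 3; 6; 11; 21];
  [:: 3; 6; 13; 20]; [:: 3; 6; 16; 25]; [:: 3; 6; 19; 23]; [:: 3; 7; 9; 17]; [:: 3; 7; 10; 20];
  [:: 3; 7; 11; 18]; [:: 3; 7; 13; 16]; [:: 3; 7; 14; 25]; [:: 3; 7; 15; 24];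
  [:: 3; 8; 11; 15]; [:: 3; 8; 12; 20]; [:: 3; 8; 14; 21]; [:: 3; 8; 16; 17];
  [:: 3; 8; 22; 23]; [:: 3; 8; 24; 25]; [:: 3; 9; 10; 13]; [:: 3; 9; 12; 25];
  [:: 3; 9; 16; 24]; [:: 3; 9; 18; 19]; [:: 3; 9; 20; 22]; [:: 3; 10; 12; 14];
  [:: 3; 10; 18; 23]; [:: 3; 10; 19; 22]; [:: 3; 10; 21; 25]; [:: 3; 11; 12; 24];
  [:: 3; 11; 13; 17]; [:: 3; 11; 14; 19]; [:: 3; 11; 16; 22]; [:: 3; 11; 20; 25];
  [:: 3; 12; 13; 23]; [:: 3; 12; 15; 22]; [:: 3; 12; 16; 19]; [:: 3; 12; 17; 21];
  [:: 3; 13; 15; 18]; [:: 3; 13; 21; 24]; [:: 3; 14; 15; 17]; [:: 3; 14; 16; 23];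
  [:: 3; 14; 18; 22]; [:: 3; 15; 19; 21]; [:: 3; 15; 23; 25]; [:: 3; 17; 18; 24];
  [:: 3; 17; 20; 23]; [:: 3; 17; 22; 25]; [:: 3; 18; 20; 21]; [:: 3; 19; 20; 24];
  [:: 4; 5; 7; 19]; [:: 4; 5; 8; 24]; [:: 4; 5; 9; 14]; [:: 4; 5; 10; 12]; [:: 4; 5; 11; 16];
  [:: 4; 5; 15; 21]; [:: 4; 5; 17; 22]; [:: 4; 5; 18; 20]; [:: 4; 5; 23; 25]; [:: 4; 6; 7; 15];
  [:: 4; 6; 8; 23]; [:: 4; 6; 9; 20]; [:: 4; 6; 10; 22]; [:: 4; 6; 11; 12]; [:: 4; 6; 13; 19];
  [:: 4; 6; 16; 17]; [:: 4; 6; 24; 25]; [:: 4; 7; 8; 9]; [:: 4; 7; 10; 16]; [:: 4; 7; 11; 25];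
  [:: 4; 7; 12; 22]; [:: 4; 7; 14; 21]; [:: 4; 7; 20; 24]; [:: 4; 8; 10; 18];
  [:: 4; 8; 11; 21]; [:: 4; 8; 12; 19]; [:: 4; 8; 14; 17]; [:: 4; 8; 16; 25];
  [:: 4; 9; 12; 16]; [:: 4; 9; 13; 21]; [:: 4; 9; 15; 22]; [:: 4; 9; 17; 18];
  [:: 4; 9; 23; 24]; [:: 4; 10; 11; 14]; [:: 4; 10; 17; 25]; [:: 4; 10; 19; 20];
  [:: 4; 10; 21; 23]; [:: 4; 11; 13; 15]; [:: 4; 11; 19; 24]; [:: 4; 11; 20; 23];
  [:: 4; 12; 13; 25]; [:: 4; 12; 14; 18]; [:: 4; 12; 15; 20]; [:: 4; 12; 17; 23];
  [:: 4; 13; 14; 24]; [:: 4; 13; 16; 23]; [:: 4; 13; 17; 20]; [:: 4; 13; 18; 22];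
  [:: 4; 14; 16; 19]; [:: 4; 14; 22; 25]; [:: 4; 15; 16; 18]; [:: 4; 15; 17; 24];
  [:: 4; 15; 19; 23]; [:: 4; 16; 20; 22]; [:: 4; 18; 19; 25]; [:: 4; 18; 21; 24];
  [:: 4; 19; 21; 22]; [:: 4; 20; 21; 25]; [:: 5; 6; 8; 20]; [:: 5; 6; 9; 25];
  [:: 5; 6; 10; 15]; [:: 5; 6; 11; 13]; [:: 5; 6; 12; 17]; [:: 5; 6; 16; 22];
  [:: 5; 6; 18; 23]; [:: 5; 6; 19; 21]; [:: 5; 7; 8; 16]; [:: 5; 7; 9; 24]; [:: 5; 7; 10; 21];
  [:: 5; 7; 11; 23]; [:: 5; 7; 12; 13]; [:: 5; 7; 14; 20]; [:: 5; 7; 17; 18]; [:: 5; 8; 9; 10];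
  [:: 5; 8; 11; 17]; [:: 5; 8; 13; 23]; [:: 5; 8; 15; 22]; [:: 5; 8; 21; 25];
  [:: 5; 9; 11; 19]; [:: 5; 9; 12; 22]; [:: 5; 9; 13; 20]; [:: 5; 9; 15; 18];
  [:: 5; 10; 13; 17]; [:: 5; 10; 14; 22]; [:: 5; 10; 16; 23]; [:: 5; 10; 18; 19];
  [:: 5; 10; 24; 25]; [:: 5; 11; 12; 15]; [:: 5; 11; 20; 21]; [:: 5; 11; 22; 24];
  [:: 5; 12; 14; 16]; [:: 5; 12; 20; 25]; [:: 5; 12; 21; 24]; [:: 5; 13; 15; 19];
  [:: 5; 13; 16; 21]; [:: 5; 13; 18; 24]; [:: 5; 14; 15; 25]; [:: 5; 14; 17; 24];
  [:: 5; 14; 18; 21]; [:: 5; 14; 19; 23]; [:: 5; 15; 17; 20]; [:: 5; 16; 17; 19];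
  [:: 5; 16; 18; 25]; [:: 5; 16; 20; 24]; [:: 5; 17; 21; 23]; [:: 5; 19; 22; 25];
  [:: 5; 20; 22; 23]; [:: 6; 7; 9; 21]; [:: 6; 7; 11; 16]; [:: 6; 7; 12; 14];
  [:: 6; 7; 13; 18]; [:: 6; 7; 17; 23]; [:: 6; 7; 19; 24]; [:: 6; 7; 20; 22]; [:: 6; 8; 9; 17];
  [:: 6; 8; 10; 25]; [:: 6; 8; 11; 22]; [:: 6; 8; 12; 24]; [:: 6; 8; 13; 14];
  [:: 6; 8; 15; 21]; [:: 6; 8; 18; 19]; [:: 6; 9; 10; 11]; [:: 6; 9; 12; 18];
  [:: 6; 9; 14; 24]; [:: 6; 9; 16; 23]; [:: 6; 10; 12; 20]; [:: 6; 10; 13; 23];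
  [:: 6; 10; 14; 21]; [:: 6; 10; 16; 19]; [:: 6; 11; 14; 18]; [:: 6; 11; 15; 23];
  [:: 6; 11; 17; 24]; [:: 6; 11; 19; 20]; [:: 6; 12; 13; 16]; [:: 6; 12; 21; 22];
  [:: 6; 12; 23; 25]; [:: 6; 13; 15; 17]; [:: 6; 13; 22; 25]; [:: 6; 14; 16; 20];
  [:: 6; 14; 17; 22]; [:: 6; 14; 19; 25]; [:: 6; 15; 18; 25]; [:: 6; 15; 19; 22];
  [:: 6; 15; 20; 24]; [:: 6; 16; 18; 21]; [:: 6; 17; 18; 20]; [:: 6; 17; 21; 25];
  [:: 6; 18; 22; 24]; [:: 6; 21; 23; 24]; [:: 7; 8; 10; 22]; [:: 7; 8; 12; 17];
  [:: 7; 8; 13; 15]; [:: 7; 8; 14; 19]; [:: 7; 8; 18; 24]; [:: 7; 8; 20; 25];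
  [:: 7; 8; 21; 23]; [:: 7; 9; 10; 18]; [:: 7; 9; 12; 23]; [:: 7; 9; 13; 25];
  [:: 7; 9; 14; 15]; [:: 7; 9; 16; 22]; [:: 7; 9; 19; 20]; [:: 7; 10; 11; 12];
  [:: 7; 10; 13; 19]; [:: 7; 10; 15; 25]; [:: 7; 10; 17; 24]; [:: 7; 11; 13; 21];
  [:: 7; 11; 14; 24]; [:: 7; 11; 15; 22]; [:: 7; 11; 17; 20]; [:: 7; 12; 15; 19];
  [:: 7; 12; 16; 24]; [:: 7; 12; 18; 25]; [:: 7; 12; 20; 21]; [:: 7; 13; 14; 17];
  [:: 7; 13; 22; 23]; [:: 7; 14; 16; 18]; [:: 7; 15; 17; 21]; [:: 7; 15; 18; 23];
  [:: 7; 16; 20; 23]; [:: 7; 16; 21; 25]; [:: 7; 17; 19; 22]; [:: 7; 18; 19; 21];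
  [:: 7; 19; 23; 25]; [:: 7; 22; 24; 25]; [:: 8; 9; 11; 23]; [:: 8; 9; 13; 18];
  [:: 8; 9; 14; 16]; [:: 8; 9; 15; 20]; [:: 8; 9; 19; 25]; [:: 8; 9; 22; 24];
  [:: 8; 10; 11; 19]; [:: 8; 10; 13; 24]; [:: 8; 10; 15; 16]; [:: 8; 10; 17; 23];
  [:: 8; 10; 20; 21]; [:: 8; 11; 12; 13]; [:: 8; 11; 14; 20]; [:: 8; 11; 18; 25];
  [:: 8; 12; 14; 22]; [:: 8; 12; 15; 25]; [:: 8; 12; 16; 23]; [:: 8; 12; 18; 21];
  [:: 8; 13; 16; 20]; [:: 8; 13; 17; 25]; [:: 8; 13; 21; 22]; [:: 8; 14; 15; 18];
  [:: 8; 14; 23; 24]; [:: 8; 15; 17; 19]; [:: 8; 16; 18; 22]; [:: 8; 16; 19; 24];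
  [:: 8; 17; 21; 24]; [:: 8; 18; 20; 23]; [:: 8; 19; 20; 22]; [:: 9; 10; 12; 24];
  [:: 9; 10; 14; 19]; [:: 9; 10; 15; 17]; [:: 9; 10; 16; 21]; [:: 9; 10; 23; 25];
  [:: 9; 11; 12; 20]; [:: 9; 11; 14; 25]; [:: 9; 11; 16; 17]; [:: 9; 11; 18; 24];
  [:: 9; 11; 21; 22]; [:: 9; 12; 13; 14]; [:: 9; 12; 15; 21]; [:: 9; 13; 15; 23];
  [:: 9; 13; 17; 24]; [:: 9; 13; 19; 22]; [:: 9; 14; 17; 21]; [:: 9; 14; 22; 23];
  [:: 9; 15; 16; 19]; [:: 9; 15; 24; 25]; [:: 9; 16; 18; 20]; [:: 9; 17; 19; 23];
  [:: 9; 17; 20; 25]; [:: 9; 18; 22; 25]; [:: 9; 19; 21; 24]; [:: 9; 20; 21; 23];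
  [:: 10; 11; 13; 25]; [:: 10; 11; 15; 20]; [:: 10; 11; 16; 18]; [:: 10; 11; 17; 22];
  [:: 10; 12; 13; 21]; [:: 10; 12; 17; 18]; [:: 10; 12; 19; 25]; [:: 10; 12; 22; 23];
  [:: 10; 13; 14; 15]; [:: 10; 13; 16; 22]; [:: 10; 14; 16; 24]; [:: 10; 14; 18; 25];
  [:: 10; 14; 20; 23]; [:: 10; 15; 18; 22]; [:: 10; 15; 23; 24]; [:: 10; 16; 17; 20];
  [:: 10; 17; 19; 21]; [:: 10; 18; 20; 24]; [:: 10; 20; 22; 25]; [:: 10; 21; 22; 24];
  [:: 11; 12; 16; 21]; [:: 11; 12; 17; 19]; [:: 11; 12; 18; 23]; [:: 11; 13; 14; 22];
  [:: 11; 13; 18; 19]; [:: 11; 13; 23; 24]; [:: 11; 14; 15; 16]; [:: 11; 14; 17; 23];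
  [:: 11; 15; 17; 25]; [:: 11; 15; 21; 24]; [:: 11; 16; 19; 23]; [:: 11; 16; 24; 25];
  [:: 11; 17; 18; 21]; [:: 11; 18; 20; 22]; [:: 11; 19; 21; 25]; [:: 11; 22; 23; 25];
  [:: 12; 13; 17; 22]; [:: 12; 13; 18; 20]; [:: 12; 13; 19; 24]; [:: 12; 14; 15; 23];
  [:: 12; 14; 19; 20]; [:: 12; 14; 24; 25]; [:: 12; 15; 16; 17]; [:: 12; 15; 18; 24];
  [:: 12; 16; 22; 25]; [:: 12; 17; 20; 24]; [:: 12; 18; 19; 22]; [:: 12; 19; 21; 23];
  [:: 13; 14; 18; 23]; [:: 13; 14; 19; 21]; [:: 13; 14; 20; 25]; [:: 13; 15; 16; 24];
  [:: 13; 15; 20; 21]; [:: 13; 16; 17; 18]; [:: 13; 16; 19; 25]; [:: 13; 18; 21; 25];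
  [:: 13; 19; 20; 23]; [:: 13; 20; 22; 24]; [:: 14; 15; 19; 24]; [:: 14; 15; 20; 22];
  [:: 14; 16; 17; 25]; [:: 14; 16; 21; 22]; [:: 14; 17; 18; 19]; [:: 14; 20; 21; 24];
  [:: 14; 21; 23; 25]; [:: 15; 16; 20; 25]; [:: 15; 16; 21; 23]; [:: 15; 17; 22; 23];
  [:: 15; 18; 19; 20]; [:: 15; 21; 22; 25]; [:: 16; 17; 22; 24]; [:: 16; 18; 23; 24];
  [:: 16; 19; 20; 21]; [:: 17; 18; 23; 25]; [:: 17; 19; 24; 25]; [:: 17; 20; 21; 22];
  [:: 18; 21; 22; 23]; [:: 19; 22; 23; 24]; [:: 20; 23; 24; 25]].

Definition sqs26_colorings : seq (seq nat) := [::
  [:: 4; 8; 7; 11; 1; 0; 2; 6; 9; 3; 5; 10; 5; 11; 6; 7; 9; 12; 1; 10; 8; 0; 2; 0; 3; 11; 12;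
      10; 7; 4; 6; 1; 9; 2; 1; 4; 3; 12; 8; 9; 10; 6; 5; 4; 2; 8; 10; 1; 9; 3; 12; 6; 9; 12; 8;
      0; 10; 11; 7; 3; 5; 10; 12; 2; 6; 10; 11; 7; 5; 8; 0; 4; 1; 5; 11; 9; 5; 2; 0; 8; 4; 0;
      2; 3; 8; 11; 6; 12; 6; 2; 7; 9; 0; 3; 11; 4; 7; 4; 5; 1];
  [:: 10; 8; 9; 3; 4; 12; 0; 2; 11; 6; 5; 1; 4; 8; 7; 11; 1; 0; 2; 6; 9; 3; 5; 5; 11; 6; 7; 9;
      12; 1; 10; 0; 2; 0; 3; 11; 12; 10; 7; 4; 6; 1; 2; 1; 4; 12; 8; 9; 10; 6; 5; 2; 8; 10; 1;
      9; 3; 12; 6; 9; 8; 0; 10; 11; 7; 3; 5; 10; 12; 2; 6; 10; 11; 7; 5; 8; 4; 1; 5; 11; 9; 5;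
      0; 8; 4; 0; 2; 3; 8; 6; 12; 2; 7; 9; 0; 3; 11; 4; 7; 4];
  [:: 1; 2; 0; 6; 10; 5; 3; 8; 9; 12; 11; 4; 10; 8; 9; 3; 4; 12; 0; 2; 11; 6; 5; 4; 8; 7; 11;
      1; 0; 6; 9; 3; 5; 5; 11; 6; 7; 9; 12; 1; 10; 2; 0; 3; 11; 12; 10; 7; 4; 1; 2; 1; 4; 12;
      8; 9; 6; 2; 8; 10; 1; 9; 3; 12; 6; 9; 8; 0; 10; 11; 7; 5; 10; 12; 2; 6; 10; 11; 7; 5; 4;
      1; 5; 11; 5; 0; 8; 4; 0; 2; 3; 8; 6; 2; 7; 9; 0; 3; 4; 7];
  [:: 12; 0; 4; 10; 6; 9; 11; 5; 8; 3; 2; 7; 1; 2; 0; 6; 10; 5; 3; 8; 9; 11; 4; 10; 8; 9; 3; 4;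
      12; 2; 11; 6; 5; 8; 7; 11; 1; 0; 6; 9; 3; 5; 5; 11; 6; 7; 9; 12; 1; 10; 2; 0; 3; 11; 12;
      7; 4; 1; 2; 1; 4; 12; 8; 9; 2; 8; 10; 1; 3; 12; 6; 9; 8; 0; 10; 7; 10; 12; 2; 6; 10; 11;
      7; 5; 4; 1; 5; 11; 5; 0; 4; 0; 2; 8; 6; 7; 9; 0; 3; 4];
  [:: 7; 11; 10; 1; 4; 8; 12; 9; 2; 5; 6; 0; 12; 0; 4; 10; 6; 9; 11; 5; 8; 3; 2; 1; 2; 0; 6;
      10; 5; 3; 8; 9; 4; 8; 9; 3; 4; 12; 2; 11; 6; 5; 8; 7; 11; 1; 0; 6; 9; 3; 5; 5; 11; 6; 7;
      9; 12; 10; 2; 0; 3; 11; 12; 7; 1; 2; 1; 4; 12; 9; 2; 8; 10; 1; 3; 6; 8; 0; 10; 7; 10; 12;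
      6; 10; 11; 7; 4; 1; 5; 11; 5; 0; 4; 0; 2; 8; 7; 9; 3; 4];
  [:: 12; 3; 1; 5; 2; 11; 9; 8; 6; 0; 7; 4; 7; 11; 10; 1; 4; 8; 9; 2; 5; 6; 0; 12; 0; 4; 10; 6;
      9; 11; 5; 8; 2; 2; 0; 6; 10; 5; 3; 8; 9; 4; 8; 9; 3; 4; 12; 2; 11; 6; 5; 8; 7; 11; 1; 0;
      6; 9; 3; 5; 11; 6; 7; 9; 12; 10; 0; 3; 12; 7; 1; 2; 1; 4; 12; 2; 8; 10; 1; 3; 6; 0; 10;
      7; 10; 12; 10; 11; 7; 4; 1; 5; 11; 5; 4; 0; 2; 8; 9; 3];
  [:: 2; 6; 11; 8; 5; 7; 1; 3; 10; 4; 0; 9; 12; 3; 1; 5; 11; 9; 8; 6; 0; 7; 4; 7; 11; 10; 1; 4;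
      8; 9; 2; 5; 0; 12; 0; 4; 10; 6; 9; 5; 8; 2; 2; 0; 6; 10; 5; 3; 9; 4; 8; 9; 3; 4; 12; 2;
      11; 6; 8; 11; 1; 0; 6; 9; 3; 5; 11; 6; 7; 9; 12; 10; 0; 3; 12; 7; 2; 1; 4; 12; 2; 8; 10;
      1; 6; 0; 10; 7; 12; 10; 11; 7; 1; 5; 11; 5; 4; 2; 8; 3];
  [:: 3; 5; 0; 8; 4; 9; 11; 10; 12; 7; 1; 2; 2; 6; 11; 8; 5; 7; 1; 10; 4; 0; 9; 12; 3; 1; 11;
      9; 8; 6; 0; 7; 4; 7; 11; 10; 1; 4; 8; 9; 2; 5; 12; 0; 4; 10; 6; 9; 5; 2; 2; 0; 6; 10; 5;
      3; 9; 8; 3; 4; 12; 2; 11; 6; 8; 11; 1; 0; 6; 9; 3; 5; 6; 7; 9; 12; 10; 0; 3; 12; 7; 2; 1;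
      4; 12; 2; 8; 10; 1; 6; 0; 7; 10; 11; 5; 11; 5; 4; 8; 3];
  [:: 4; 5; 0; 2; 6; 9; 7; 12; 10; 11; 8; 3; 3; 5; 0; 8; 9; 11; 10; 12; 7; 1; 2; 2; 6; 11; 8;
      7; 1; 10; 4; 0; 9; 12; 3; 1; 11; 9; 8; 6; 7; 4; 7; 11; 10; 1; 4; 8; 9; 5; 12; 0; 4; 10;
      9; 5; 2; 2; 0; 6; 10; 5; 3; 9; 8; 3; 4; 12; 2; 11; 6; 8; 11; 1; 0; 6; 3; 5; 6; 9; 12; 10;
      0; 3; 7; 2; 1; 4; 12; 2; 8; 1; 6; 0; 7; 10; 11; 5; 5; 4];
  [:: 3; 10; 9; 4; 5; 2; 0; 11; 6; 7; 1; 8; 4; 5; 0; 2; 6; 9; 7; 12; 10; 11; 8; 3; 5; 0; 8; 9;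
      11; 12; 7; 1; 2; 2; 6; 11; 8; 7; 1; 10; 4; 0; 12; 3; 1; 11; 9; 8; 6; 7; 7; 11; 10; 1; 4;
      8; 9; 12; 0; 4; 10; 9; 5; 2; 6; 10; 5; 3; 9; 8; 3; 4; 12; 2; 6; 8; 11; 1; 0; 3; 5; 6; 9;
      12; 10; 0; 3; 2; 4; 12; 2; 1; 6; 0; 7; 10; 11; 5; 5; 4];
  [:: 4; 8; 12; 1; 7; 10; 2; 3; 6; 0; 11; 5; 3; 10; 9; 5; 2; 0; 11; 6; 7; 1; 8; 4; 5; 0; 2; 6;
      9; 7; 12; 10; 11; 3; 5; 0; 8; 9; 11; 7; 1; 2; 2; 6; 11; 8; 7; 10; 4; 0; 12; 3; 1; 11; 9;
      8; 6; 7; 11; 10; 1; 4; 8; 9; 12; 0; 4; 10; 9; 5; 2; 6; 5; 3; 9; 8; 3; 4; 12; 6; 8; 11; 1;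
      0; 5; 9; 12; 10; 0; 3; 2; 4; 12; 2; 1; 6; 7; 10; 5; 4];
  [:: 0; 3; 2; 10; 7; 11; 9; 6; 8; 12; 4; 5; 4; 8; 12; 1; 7; 10; 2; 3; 6; 11; 5; 10; 9; 5; 2;
      0; 11; 6; 7; 1; 8; 4; 5; 0; 2; 6; 9; 7; 12; 10; 11; 3; 5; 0; 8; 9; 11; 7; 1; 2; 6; 11; 8;
      7; 4; 0; 12; 3; 1; 11; 9; 8; 6; 10; 1; 4; 8; 9; 12; 0; 4; 10; 5; 2; 6; 5; 3; 9; 8; 3; 4;
      12; 11; 1; 0; 5; 9; 10; 0; 3; 2; 12; 2; 1; 6; 7; 10; 4];
  [:: 7; 3; 9; 11; 0; 5; 6; 8; 2; 1; 10; 4; 0; 3; 2; 10; 11; 9; 6; 8; 12; 4; 5; 4; 8; 12; 1; 7;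
      10; 2; 6; 11; 5; 10; 5; 2; 0; 11; 6; 7; 1; 8; 4; 5; 0; 2; 6; 9; 7; 12; 10; 3; 5; 8; 9;
      11; 7; 1; 2; 6; 11; 8; 7; 4; 0; 12; 3; 1; 11; 9; 8; 6; 10; 1; 4; 8; 9; 12; 0; 4; 10; 2;
      5; 3; 9; 3; 4; 12; 11; 1; 0; 5; 9; 10; 0; 3; 12; 2; 6; 7];
  [:: 1; 6; 5; 2; 9; 7; 0; 8; 4; 3; 10; 12; 7; 3; 9; 11; 0; 5; 6; 8; 2; 10; 4; 0; 3; 2; 10; 11;
      9; 8; 12; 4; 5; 4; 8; 12; 1; 7; 10; 2; 6; 11; 10; 5; 0; 11; 6; 7; 1; 8; 4; 5; 0; 2; 6; 7;
      12; 10; 3; 5; 8; 9; 11; 1; 2; 6; 11; 8; 7; 4; 12; 3; 1; 11; 9; 6; 10; 1; 8; 9; 12; 0; 4;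
      10; 2; 5; 9; 3; 4; 12; 11; 1; 0; 5; 9; 0; 3; 2; 6; 7];
  [:: 10; 4; 5; 8; 11; 1; 6; 9; 12; 0; 3; 2; 1; 6; 5; 2; 9; 7; 0; 8; 4; 3; 12; 7; 3; 9; 11; 0;
      5; 6; 8; 2; 10; 0; 3; 2; 10; 11; 9; 8; 12; 4; 4; 12; 1; 7; 10; 2; 6; 11; 10; 5; 0; 6; 7;
      1; 8; 4; 5; 0; 2; 6; 7; 12; 10; 3; 5; 8; 9; 11; 2; 11; 8; 7; 4; 12; 3; 1; 11; 6; 10; 1;
      8; 9; 0; 4; 10; 2; 5; 9; 3; 4; 12; 11; 1; 5; 9; 0; 6; 7];
  [:: 4; 0; 2; 11; 6; 10; 3; 8; 9; 12; 5; 7; 10; 5; 8; 11; 1; 6; 9; 12; 0; 3; 2; 1; 6; 5; 2; 9;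
      7; 8; 4; 3; 12; 7; 3; 9; 11; 0; 5; 6; 8; 2; 10; 0; 3; 10; 11; 9; 8; 12; 4; 4; 12; 1; 7;
      10; 2; 6; 10; 5; 0; 7; 1; 8; 4; 5; 0; 2; 6; 7; 12; 3; 5; 8; 9; 11; 2; 11; 8; 7; 4; 12; 1;
      11; 6; 10; 1; 9; 0; 4; 10; 2; 5; 3; 4; 11; 1; 9; 0; 6];
  [:: 9; 5; 12; 10; 2; 7; 0; 8; 4; 1; 11; 6; 4; 0; 2; 11; 6; 10; 3; 8; 12; 5; 7; 10; 8; 11; 1;
      6; 9; 12; 0; 3; 2; 1; 6; 5; 2; 9; 7; 8; 4; 3; 7; 3; 9; 11; 0; 5; 6; 8; 2; 0; 3; 10; 11;
      9; 8; 12; 4; 4; 12; 1; 7; 10; 6; 10; 5; 0; 1; 8; 4; 5; 2; 6; 7; 12; 3; 5; 9; 11; 2; 11;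
      8; 7; 12; 1; 11; 6; 10; 9; 0; 4; 10; 2; 5; 3; 4; 1; 9; 0];
  [:: 4; 7; 1; 5; 11; 12; 8; 6; 9; 10; 2; 3; 9; 5; 12; 10; 2; 7; 0; 8; 1; 11; 6; 4; 0; 2; 11;
      6; 10; 3; 8; 12; 5; 10; 8; 11; 6; 9; 12; 0; 3; 2; 1; 6; 2; 9; 7; 8; 4; 3; 7; 3; 9; 0; 5;
      6; 8; 2; 0; 3; 10; 11; 9; 8; 4; 4; 12; 1; 7; 10; 6; 10; 5; 0; 1; 4; 5; 2; 6; 7; 12; 3; 5;
      9; 11; 2; 11; 8; 7; 12; 1; 11; 10; 0; 4; 5; 4; 1; 9; 0];
  [:: 6; 10; 11; 2; 7; 4; 5; 12; 8; 0; 1; 9; 4; 7; 1; 5; 11; 12; 8; 9; 10; 2; 3; 9; 5; 12; 2;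
      7; 0; 8; 1; 11; 6; 4; 0; 2; 6; 10; 3; 8; 12; 5; 10; 8; 11; 6; 9; 12; 0; 3; 1; 6; 2; 9; 8;
      4; 3; 7; 3; 9; 0; 5; 6; 8; 2; 0; 3; 10; 11; 9; 8; 4; 12; 1; 7; 10; 6; 10; 0; 1; 4; 5; 2;
      6; 7; 3; 5; 9; 11; 2; 11; 7; 12; 1; 11; 10; 4; 5; 4; 0];
  [:: 9; 7; 6; 0; 3; 5; 10; 12; 1; 2; 11; 4; 6; 10; 11; 2; 7; 4; 5; 12; 8; 0; 1; 4; 1; 5; 11;
      12; 8; 9; 10; 2; 3; 9; 5; 12; 2; 7; 0; 8; 1; 11; 4; 0; 2; 6; 10; 3; 8; 12; 5; 10; 8; 11;
      6; 9; 12; 3; 1; 6; 2; 9; 8; 4; 7; 3; 9; 0; 6; 8; 2; 0; 3; 11; 9; 8; 4; 1; 7; 10; 6; 10;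
      0; 4; 5; 6; 7; 3; 5; 9; 11; 2; 11; 7; 12; 1; 10; 4; 5; 0];
  [:: 6; 1; 9; 12; 3; 8; 2; 0; 10; 7; 11; 5; 9; 7; 0; 3; 5; 10; 12; 1; 2; 11; 4; 6; 10; 11; 2;
      7; 4; 5; 12; 8; 0; 4; 1; 5; 11; 12; 8; 10; 2; 3; 9; 5; 12; 2; 7; 0; 8; 1; 11; 4; 0; 2; 6;
      10; 3; 8; 5; 10; 8; 11; 6; 9; 12; 1; 6; 2; 9; 4; 7; 3; 9; 0; 6; 8; 3; 11; 9; 8; 4; 1; 7;
      10; 6; 0; 4; 5; 6; 3; 5; 9; 11; 2; 7; 12; 1; 10; 4; 0];
  [:: 5; 4; 2; 8; 11; 10; 1; 9; 6; 3; 12; 0; 6; 1; 9; 12; 3; 8; 2; 0; 10; 7; 11; 9; 7; 0; 3; 5;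
      10; 12; 1; 2; 11; 6; 10; 11; 7; 4; 5; 12; 8; 0; 4; 1; 5; 11; 12; 10; 2; 3; 9; 5; 12; 2;
      7; 0; 8; 1; 4; 0; 2; 6; 3; 8; 5; 10; 8; 11; 6; 9; 12; 6; 2; 9; 4; 7; 3; 9; 0; 6; 8; 3;
      11; 8; 4; 1; 7; 10; 0; 4; 5; 6; 5; 9; 11; 2; 7; 1; 10; 4];
  [:: 0; 2; 1; 4; 3; 12; 8; 9; 10; 6; 11; 7; 5; 4; 2; 8; 11; 10; 1; 9; 6; 3; 12; 6; 1; 9; 12;
      3; 8; 0; 10; 7; 11; 9; 7; 0; 3; 5; 10; 12; 2; 11; 6; 10; 11; 7; 5; 12; 8; 0; 4; 1; 5; 11;
      12; 10; 2; 9; 5; 2; 7; 0; 8; 1; 4; 0; 2; 6; 3; 5; 10; 8; 11; 6; 12; 6; 2; 9; 4; 7; 3; 9;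
      0; 6; 8; 3; 11; 8; 4; 1; 7; 0; 4; 5; 5; 9; 2; 1; 10; 4];
  [:: 0; 3; 11; 12; 10; 7; 5; 4; 6; 8; 1; 9; 2; 1; 4; 3; 12; 8; 9; 10; 6; 11; 7; 5; 4; 2; 8;
      11; 10; 1; 9; 6; 3; 12; 6; 1; 9; 12; 8; 0; 10; 7; 11; 9; 7; 0; 3; 5; 10; 12; 2; 6; 10;
      11; 7; 5; 8; 0; 4; 1; 5; 11; 12; 2; 9; 5; 2; 0; 8; 1; 4; 0; 2; 6; 3; 10; 8; 11; 6; 12; 6;
      2; 9; 7; 3; 9; 0; 8; 3; 11; 4; 7; 0; 4; 5; 5; 2; 1; 10; 4];
  [:: 5; 11; 6; 7; 9; 12; 1; 10; 8; 0; 2; 4; 0; 3; 11; 12; 10; 7; 4; 6; 8; 1; 9; 2; 1; 4; 3;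
      12; 8; 9; 10; 6; 7; 5; 4; 2; 8; 11; 10; 1; 9; 3; 12; 6; 1; 9; 12; 8; 0; 10; 11; 7; 0; 3;
      5; 10; 12; 2; 6; 10; 11; 7; 5; 8; 0; 4; 1; 5; 11; 2; 9; 5; 2; 0; 8; 4; 0; 2; 6; 3; 8; 11;
      6; 12; 6; 2; 9; 7; 3; 9; 0; 3; 11; 4; 7; 4; 5; 5; 1; 10];
  [:: 4; 8; 7; 11; 1; 0; 2; 6; 9; 3; 5; 10; 5; 11; 6; 7; 9; 12; 1; 10; 8; 0; 2; 0; 3; 11; 12;
      10; 7; 4; 6; 1; 9; 2; 1; 4; 3; 12; 8; 9; 10; 6; 5; 4; 2; 8; 10; 1; 9; 3; 12; 6; 9; 12; 8;
      0; 10; 11; 7; 3; 5; 10; 12; 2; 6; 10; 11; 7; 5; 8; 0; 4; 1; 5; 11; 9; 5; 2; 0; 8; 4; 0;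
      2; 3; 8; 11; 6; 12; 6; 2; 7; 9; 0; 3; 11; 4; 7; 4; 5; 1]].

Definition sqs32_blocks : seq (seq nat) := [::
  [:: 0; 1; 2; 3]; [:: 0; 1; 4; 5]; [:: 0; 1; 6; 8]; [:: 0; 1; 7; 9]; [:: 0; 1; 10; 20];
  [:: 0; 1; 11; 21]; [:: 0; 1; 12; 13]; [:: 0; 1; 14; 29]; [:: 0; 1; 15; 28];
  [:: 0; 1; 16; 17]; [:: 0; 1; 18; 24]; [:: 0; 1; 19; 25]; [:: 0; 1; 22; 30];
  [:: 0; 1; 23; 31]; [:: 0; 1; 26; 27]; [:: 0; 2; 4; 31]; [:: 0; 2; 5; 7]; [:: 0; 2; 6; 29];
  [:: 0; 2; 8; 10]; [:: 0; 2; 9; 11]; [:: 0; 2; 12; 14]; [:: 0; 2; 13; 25]; [:: 0; 2; 15; 27];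
  [:: 0; 2; 16; 20]; [:: 0; 2; 17; 24]; [:: 0; 2; 18; 22]; [:: 0; 2; 19; 26];
  [:: 0; 2; 21; 23]; [:: 0; 2; 28; 30]; [:: 0; 3; 4; 8]; [:: 0; 3; 5; 6]; [:: 0; 3; 7; 11];
  [:: 0; 3; 9; 30]; [:: 0; 3; 10; 29]; [:: 0; 3; 12; 21]; [:: 0; 3; 13; 28]; [:: 0; 3; 14; 31];
  [:: 0; 3; 15; 22]; [:: 0; 3; 16; 19]; [:: 0; 3; 17; 23]; [:: 0; 3; 18; 20];
  [:: 0; 3; 24; 27]; [:: 0; 3; 25; 26]; [:: 0; 4; 6; 27]; [:: 0; 4; 7; 12]; [:: 0; 4; 9; 25];
  [:: 0; 4; 10; 14]; [:: 0; 4; 11; 15]; [:: 0; 4; 13; 29]; [:: 0; 4; 16; 18];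
  [:: 0; 4; 17; 21]; [:: 0; 4; 19; 23]; [:: 0; 4; 20; 22]; [:: 0; 4; 24; 28];
  [:: 0; 4; 26; 30]; [:: 0; 5; 8; 13]; [:: 0; 5; 9; 29]; [:: 0; 5; 10; 16]; [:: 0; 5; 11; 19];
  [:: 0; 5; 12; 24]; [:: 0; 5; 14; 22]; [:: 0; 5; 15; 21]; [:: 0; 5; 17; 20];
  [:: 0; 5; 18; 30]; [:: 0; 5; 23; 27]; [:: 0; 5; 25; 31]; [:: 0; 5; 26; 28]; [:: 0; 6; 7; 14];
  [:: 0; 6; 9; 15]; [:: 0; 6; 10; 21]; [:: 0; 6; 11; 16]; [:: 0; 6; 12; 19]; [:: 0; 6; 13; 22];
  [:: 0; 6; 17; 18]; [:: 0; 6; 20; 23]; [:: 0; 6; 24; 30]; [:: 0; 6; 25; 28];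
  [:: 0; 6; 26; 31]; [:: 0; 7; 8; 25]; [:: 0; 7; 10; 13]; [:: 0; 7; 15; 30]; [:: 0; 7; 16; 23];
  [:: 0; 7; 17; 26]; [:: 0; 7; 18; 21]; [:: 0; 7; 19; 20]; [:: 0; 7; 22; 29];
  [:: 0; 7; 24; 31]; [:: 0; 7; 27; 28]; [:: 0; 8; 9; 14]; [:: 0; 8; 11; 12]; [:: 0; 8; 15; 17];
  [:: 0; 8; 16; 24]; [:: 0; 8; 18; 28]; [:: 0; 8; 19; 27]; [:: 0; 8; 20; 26];
  [:: 0; 8; 21; 29]; [:: 0; 8; 22; 23]; [:: 0; 8; 30; 31]; [:: 0; 9; 10; 23];
  [:: 0; 9; 12; 20]; [:: 0; 9; 13; 16]; [:: 0; 9; 17; 19]; [:: 0; 9; 18; 27];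
  [:: 0; 9; 21; 28]; [:: 0; 9; 22; 31]; [:: 0; 9; 24; 26]; [:: 0; 10; 11; 30];
  [:: 0; 10; 12; 31]; [:: 0; 10; 15; 26]; [:: 0; 10; 17; 27]; [:: 0; 10; 18; 19];
  [:: 0; 10; 22; 28]; [:: 0; 10; 24; 25]; [:: 0; 11; 13; 27]; [:: 0; 11; 14; 24];
  [:: 0; 11; 17; 22]; [:: 0; 11; 18; 25]; [:: 0; 11; 20; 31]; [:: 0; 11; 23; 28];
  [:: 0; 11; 26; 29]; [:: 0; 12; 15; 25]; [:: 0; 12; 16; 28]; [:: 0; 12; 17; 29];
  [:: 0; 12; 18; 23]; [:: 0; 12; 22; 26]; [:: 0; 12; 27; 30]; [:: 0; 13; 14; 17];
  [:: 0; 13; 15; 20]; [:: 0; 13; 18; 31]; [:: 0; 13; 19; 30]; [:: 0; 13; 21; 24];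
  [:: 0; 13; 23; 26]; [:: 0; 14; 15; 19]; [:: 0; 14; 16; 30]; [:: 0; 14; 18; 26];
  [:: 0; 14; 20; 28]; [:: 0; 14; 21; 27]; [:: 0; 14; 23; 25]; [:: 0; 15; 16; 31];
  [:: 0; 15; 18; 29]; [:: 0; 15; 23; 24]; [:: 0; 16; 21; 26]; [:: 0; 16; 22; 27];
  [:: 0; 16; 25; 29]; [:: 0; 17; 25; 30]; [:: 0; 17; 28; 31]; [:: 0; 19; 21; 31];
  [:: 0; 19; 22; 24]; [:: 0; 19; 28; 29]; [:: 0; 20; 21; 30]; [:: 0; 20; 24; 29];
  [:: 0; 20; 25; 27]; [:: 0; 21; 22; 25]; [:: 0; 23; 29; 30]; [:: 0; 27; 29; 31];
  [:: 1; 2; 4; 7]; [:: 1; 2; 5; 9]; [:: 1; 2; 6; 10]; [:: 1; 2; 8; 31]; [:: 1; 2; 11; 28];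
  [:: 1; 2; 12; 29]; [:: 1; 2; 13; 20]; [:: 1; 2; 14; 23]; [:: 1; 2; 15; 30];
  [:: 1; 2; 16; 22]; [:: 1; 2; 17; 18]; [:: 1; 2; 19; 21]; [:: 1; 2; 24; 27];
  [:: 1; 2; 25; 26]; [:: 1; 3; 4; 6]; [:: 1; 3; 5; 30]; [:: 1; 3; 7; 28]; [:: 1; 3; 8; 10];
  [:: 1; 3; 9; 11]; [:: 1; 3; 12; 24]; [:: 1; 3; 13; 15]; [:: 1; 3; 14; 26]; [:: 1; 3; 16; 25];
  [:: 1; 3; 17; 21]; [:: 1; 3; 18; 27]; [:: 1; 3; 19; 23]; [:: 1; 3; 20; 22];
  [:: 1; 3; 29; 31]; [:: 1; 4; 8; 28]; [:: 1; 4; 9; 12]; [:: 1; 4; 10; 18]; [:: 1; 4; 11; 17];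
  [:: 1; 4; 13; 25]; [:: 1; 4; 14; 20]; [:: 1; 4; 15; 23]; [:: 1; 4; 16; 21];
  [:: 1; 4; 19; 31]; [:: 1; 4; 22; 26]; [:: 1; 4; 24; 30]; [:: 1; 4; 27; 29]; [:: 1; 5; 6; 13];
  [:: 1; 5; 7; 26]; [:: 1; 5; 8; 24]; [:: 1; 5; 10; 14]; [:: 1; 5; 11; 15]; [:: 1; 5; 12; 28];
  [:: 1; 5; 16; 20]; [:: 1; 5; 17; 19]; [:: 1; 5; 18; 22]; [:: 1; 5; 21; 23];
  [:: 1; 5; 25; 29]; [:: 1; 5; 27; 31]; [:: 1; 6; 7; 15]; [:: 1; 6; 9; 24]; [:: 1; 6; 11; 12];
  [:: 1; 6; 14; 31]; [:: 1; 6; 16; 27]; [:: 1; 6; 17; 22]; [:: 1; 6; 18; 21];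
  [:: 1; 6; 19; 20]; [:: 1; 6; 23; 28]; [:: 1; 6; 25; 30]; [:: 1; 6; 26; 29]; [:: 1; 7; 8; 14];
  [:: 1; 7; 10; 17]; [:: 1; 7; 11; 20]; [:: 1; 7; 12; 23]; [:: 1; 7; 13; 18];
  [:: 1; 7; 16; 19]; [:: 1; 7; 21; 22]; [:: 1; 7; 24; 29]; [:: 1; 7; 25; 31];
  [:: 1; 7; 27; 30]; [:: 1; 8; 9; 15]; [:: 1; 8; 11; 22]; [:: 1; 8; 12; 17]; [:: 1; 8; 13; 21];
  [:: 1; 8; 16; 18]; [:: 1; 8; 19; 26]; [:: 1; 8; 20; 29]; [:: 1; 8; 23; 30];
  [:: 1; 8; 25; 27]; [:: 1; 9; 10; 13]; [:: 1; 9; 14; 16]; [:: 1; 9; 17; 25];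
  [:: 1; 9; 18; 26]; [:: 1; 9; 19; 29]; [:: 1; 9; 20; 28]; [:: 1; 9; 21; 27];
  [:: 1; 9; 22; 23]; [:: 1; 9; 30; 31]; [:: 1; 10; 11; 31]; [:: 1; 10; 12; 26];
  [:: 1; 10; 15; 25]; [:: 1; 10; 16; 23]; [:: 1; 10; 19; 24]; [:: 1; 10; 21; 30];
  [:: 1; 10; 22; 29]; [:: 1; 10; 27; 28]; [:: 1; 11; 13; 30]; [:: 1; 11; 14; 27];
  [:: 1; 11; 16; 26]; [:: 1; 11; 18; 19]; [:: 1; 11; 23; 29]; [:: 1; 11; 24; 25];
  [:: 1; 12; 14; 21]; [:: 1; 12; 15; 16]; [:: 1; 12; 18; 31]; [:: 1; 12; 19; 30];
  [:: 1; 12; 20; 25]; [:: 1; 12; 22; 27]; [:: 1; 13; 14; 24]; [:: 1; 13; 16; 28];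
  [:: 1; 13; 17; 29]; [:: 1; 13; 19; 22]; [:: 1; 13; 23; 27]; [:: 1; 13; 26; 31];
  [:: 1; 14; 15; 18]; [:: 1; 14; 17; 30]; [:: 1; 14; 19; 28]; [:: 1; 14; 22; 25];
  [:: 1; 15; 17; 31]; [:: 1; 15; 19; 27]; [:: 1; 15; 20; 26]; [:: 1; 15; 21; 29];
  [:: 1; 15; 22; 24]; [:: 1; 16; 24; 31]; [:: 1; 16; 29; 30]; [:: 1; 17; 20; 27];
  [:: 1; 17; 23; 26]; [:: 1; 17; 24; 28]; [:: 1; 18; 20; 30]; [:: 1; 18; 23; 25];
  [:: 1; 18; 28; 29]; [:: 1; 20; 21; 31]; [:: 1; 20; 23; 24]; [:: 1; 21; 24; 26];
  [:: 1; 21; 25; 28]; [:: 1; 22; 28; 31]; [:: 1; 26; 28; 30]; [:: 2; 3; 4; 10];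
  [:: 2; 3; 5; 11]; [:: 2; 3; 6; 7]; [:: 2; 3; 8; 22]; [:: 2; 3; 9; 23]; [:: 2; 3; 12; 31];
  [:: 2; 3; 13; 30]; [:: 2; 3; 14; 15]; [:: 2; 3; 16; 26]; [:: 2; 3; 17; 27];
  [:: 2; 3; 18; 19]; [:: 2; 3; 20; 28]; [:: 2; 3; 21; 29]; [:: 2; 3; 24; 25]; [:: 2; 4; 5; 12];
  [:: 2; 4; 6; 25]; [:: 2; 4; 8; 23]; [:: 2; 4; 9; 18]; [:: 2; 4; 11; 13]; [:: 2; 4; 14; 17];
  [:: 2; 4; 15; 20]; [:: 2; 4; 16; 19]; [:: 2; 4; 21; 22]; [:: 2; 4; 24; 29];
  [:: 2; 4; 26; 28]; [:: 2; 4; 27; 30]; [:: 2; 5; 6; 14]; [:: 2; 5; 8; 15]; [:: 2; 5; 10; 27];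
  [:: 2; 5; 13; 28]; [:: 2; 5; 16; 23]; [:: 2; 5; 17; 22]; [:: 2; 5; 18; 21];
  [:: 2; 5; 19; 24]; [:: 2; 5; 20; 31]; [:: 2; 5; 25; 30]; [:: 2; 5; 26; 29]; [:: 2; 6; 8; 12];
  [:: 2; 6; 9; 13]; [:: 2; 6; 11; 27]; [:: 2; 6; 15; 31]; [:: 2; 6; 16; 18]; [:: 2; 6; 17; 21];
  [:: 2; 6; 19; 23]; [:: 2; 6; 20; 22]; [:: 2; 6; 24; 28]; [:: 2; 6; 26; 30]; [:: 2; 7; 8; 18];
  [:: 2; 7; 9; 17]; [:: 2; 7; 10; 15]; [:: 2; 7; 11; 31]; [:: 2; 7; 12; 20]; [:: 2; 7; 13; 23];
  [:: 2; 7; 14; 26]; [:: 2; 7; 16; 28]; [:: 2; 7; 19; 22]; [:: 2; 7; 21; 25];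
  [:: 2; 7; 24; 30]; [:: 2; 7; 27; 29]; [:: 2; 8; 9; 28]; [:: 2; 8; 11; 21]; [:: 2; 8; 13; 24];
  [:: 2; 8; 14; 29]; [:: 2; 8; 16; 17]; [:: 2; 8; 19; 25]; [:: 2; 8; 20; 30];
  [:: 2; 8; 26; 27]; [:: 2; 9; 10; 14]; [:: 2; 9; 12; 26]; [:: 2; 9; 15; 25];
  [:: 2; 9; 16; 27]; [:: 2; 9; 19; 20]; [:: 2; 9; 21; 30]; [:: 2; 9; 22; 29];
  [:: 2; 9; 24; 31]; [:: 2; 10; 11; 12]; [:: 2; 10; 13; 19]; [:: 2; 10; 16; 30];
  [:: 2; 10; 17; 25]; [:: 2; 10; 18; 26]; [:: 2; 10; 20; 21]; [:: 2; 10; 22; 24];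
  [:: 2; 10; 23; 31]; [:: 2; 10; 28; 29]; [:: 2; 11; 14; 22]; [:: 2; 11; 15; 18];
  [:: 2; 11; 16; 25]; [:: 2; 11; 17; 19]; [:: 2; 11; 20; 29]; [:: 2; 11; 23; 30];
  [:: 2; 11; 24; 26]; [:: 2; 12; 13; 17]; [:: 2; 12; 15; 19]; [:: 2; 12; 16; 24];
  [:: 2; 12; 18; 28]; [:: 2; 12; 21; 27]; [:: 2; 12; 22; 30]; [:: 2; 12; 23; 25];
  [:: 2; 13; 14; 27]; [:: 2; 13; 15; 22]; [:: 2; 13; 16; 31]; [:: 2; 13; 18; 29];
  [:: 2; 13; 21; 26]; [:: 2; 14; 16; 21]; [:: 2; 14; 18; 30]; [:: 2; 14; 19; 31];
  [:: 2; 14; 20; 24]; [:: 2; 14; 25; 28]; [:: 2; 15; 16; 29]; [:: 2; 15; 17; 28];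
  [:: 2; 15; 21; 24]; [:: 2; 15; 23; 26]; [:: 2; 17; 20; 26]; [:: 2; 17; 23; 29];
  [:: 2; 17; 30; 31]; [:: 2; 18; 20; 25]; [:: 2; 18; 23; 24]; [:: 2; 18; 27; 31];
  [:: 2; 19; 27; 28]; [:: 2; 19; 29; 30]; [:: 2; 20; 23; 27]; [:: 2; 21; 28; 31];
  [:: 2; 22; 23; 28]; [:: 2; 22; 25; 27]; [:: 2; 22; 26; 31]; [:: 2; 25; 29; 31];
  [:: 3; 4; 5; 13]; [:: 3; 4; 7; 15]; [:: 3; 4; 9; 14]; [:: 3; 4; 11; 26]; [:: 3; 4; 12; 29];
  [:: 3; 4; 16; 23]; [:: 3; 4; 17; 22]; [:: 3; 4; 18; 25]; [:: 3; 4; 19; 20];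
  [:: 3; 4; 21; 30]; [:: 3; 4; 24; 31]; [:: 3; 4; 27; 28]; [:: 3; 5; 7; 24]; [:: 3; 5; 8; 19];
  [:: 3; 5; 9; 22]; [:: 3; 5; 10; 12]; [:: 3; 5; 14; 21]; [:: 3; 5; 15; 16]; [:: 3; 5; 17; 18];
  [:: 3; 5; 20; 23]; [:: 3; 5; 25; 28]; [:: 3; 5; 26; 31]; [:: 3; 5; 27; 29]; [:: 3; 6; 8; 16];
  [:: 3; 6; 9; 19]; [:: 3; 6; 10; 30]; [:: 3; 6; 11; 14]; [:: 3; 6; 12; 22]; [:: 3; 6; 13; 21];
  [:: 3; 6; 15; 27]; [:: 3; 6; 17; 29]; [:: 3; 6; 18; 23]; [:: 3; 6; 20; 24];
  [:: 3; 6; 25; 31]; [:: 3; 6; 26; 28]; [:: 3; 7; 8; 12]; [:: 3; 7; 9; 13]; [:: 3; 7; 10; 26];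
  [:: 3; 7; 14; 30]; [:: 3; 7; 16; 20]; [:: 3; 7; 17; 19]; [:: 3; 7; 18; 22];
  [:: 3; 7; 21; 23]; [:: 3; 7; 25; 29]; [:: 3; 7; 27; 31]; [:: 3; 8; 9; 29]; [:: 3; 8; 11; 15];
  [:: 3; 8; 13; 27]; [:: 3; 8; 14; 24]; [:: 3; 8; 17; 26]; [:: 3; 8; 18; 21];
  [:: 3; 8; 20; 31]; [:: 3; 8; 23; 28]; [:: 3; 8; 25; 30]; [:: 3; 9; 10; 20];
  [:: 3; 9; 12; 25]; [:: 3; 9; 15; 28]; [:: 3; 9; 16; 17]; [:: 3; 9; 18; 24];
  [:: 3; 9; 21; 31]; [:: 3; 9; 26; 27]; [:: 3; 10; 11; 13]; [:: 3; 10; 14; 19];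
  [:: 3; 10; 15; 23]; [:: 3; 10; 16; 18]; [:: 3; 10; 17; 24]; [:: 3; 10; 21; 28];
  [:: 3; 10; 22; 31]; [:: 3; 10; 25; 27]; [:: 3; 11; 12; 18]; [:: 3; 11; 16; 24];
  [:: 3; 11; 17; 31]; [:: 3; 11; 19; 27]; [:: 3; 11; 20; 21]; [:: 3; 11; 22; 30];
  [:: 3; 11; 23; 25]; [:: 3; 11; 28; 29]; [:: 3; 12; 13; 16]; [:: 3; 12; 14; 23];
  [:: 3; 12; 15; 26]; [:: 3; 12; 17; 30]; [:: 3; 12; 19; 28]; [:: 3; 12; 20; 27];
  [:: 3; 13; 14; 18]; [:: 3; 13; 17; 25]; [:: 3; 13; 19; 29]; [:: 3; 13; 20; 26];
  [:: 3; 13; 22; 24]; [:: 3; 13; 23; 31]; [:: 3; 14; 16; 29]; [:: 3; 14; 17; 28];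
  [:: 3; 14; 20; 25]; [:: 3; 14; 22; 27]; [:: 3; 15; 17; 20]; [:: 3; 15; 18; 30];
  [:: 3; 15; 19; 31]; [:: 3; 15; 21; 25]; [:: 3; 15; 24; 29]; [:: 3; 16; 21; 27];
  [:: 3; 16; 22; 28]; [:: 3; 16; 30; 31]; [:: 3; 18; 26; 29]; [:: 3; 18; 28; 31];
  [:: 3; 19; 21; 24]; [:: 3; 19; 22; 25]; [:: 3; 19; 26; 30]; [:: 3; 20; 29; 30];
  [:: 3; 21; 22; 26]; [:: 3; 22; 23; 29]; [:: 3; 23; 24; 26]; [:: 3; 23; 27; 30];
  [:: 3; 24; 28; 30]; [:: 4; 5; 6; 7]; [:: 4; 5; 8; 9]; [:: 4; 5; 10; 25]; [:: 4; 5; 11; 24];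
  [:: 4; 5; 14; 16]; [:: 4; 5; 15; 17]; [:: 4; 5; 18; 26]; [:: 4; 5; 19; 27];
  [:: 4; 5; 20; 21]; [:: 4; 5; 22; 28]; [:: 4; 5; 23; 29]; [:: 4; 5; 30; 31]; [:: 4; 6; 8; 10];
  [:: 4; 6; 9; 29]; [:: 4; 6; 11; 31]; [:: 4; 6; 12; 14]; [:: 4; 6; 13; 15]; [:: 4; 6; 16; 20];
  [:: 4; 6; 17; 19]; [:: 4; 6; 18; 22]; [:: 4; 6; 21; 28]; [:: 4; 6; 23; 30];
  [:: 4; 6; 24; 26]; [:: 4; 7; 8; 17]; [:: 4; 7; 9; 24]; [:: 4; 7; 10; 27]; [:: 4; 7; 11; 18];
  [:: 4; 7; 13; 26]; [:: 4; 7; 14; 25]; [:: 4; 7; 16; 22]; [:: 4; 7; 19; 21];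
  [:: 4; 7; 20; 23]; [:: 4; 7; 28; 31]; [:: 4; 7; 29; 30]; [:: 4; 8; 11; 29];
  [:: 4; 8; 12; 15]; [:: 4; 8; 13; 16]; [:: 4; 8; 14; 27]; [:: 4; 8; 18; 30];
  [:: 4; 8; 19; 22]; [:: 4; 8; 20; 24]; [:: 4; 8; 21; 25]; [:: 4; 8; 26; 31];
  [:: 4; 9; 10; 21]; [:: 4; 9; 11; 16]; [:: 4; 9; 13; 20]; [:: 4; 9; 15; 31];
  [:: 4; 9; 17; 28]; [:: 4; 9; 19; 30]; [:: 4; 9; 22; 27]; [:: 4; 9; 23; 26];
  [:: 4; 10; 11; 23]; [:: 4; 10; 12; 13]; [:: 4; 10; 15; 28]; [:: 4; 10; 16; 24];
  [:: 4; 10; 17; 31]; [:: 4; 10; 19; 29]; [:: 4; 10; 20; 26]; [:: 4; 10; 22; 30];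
  [:: 4; 11; 12; 21]; [:: 4; 11; 14; 30]; [:: 4; 11; 19; 28]; [:: 4; 11; 20; 27];
  [:: 4; 11; 22; 25]; [:: 4; 12; 16; 30]; [:: 4; 12; 17; 25]; [:: 4; 12; 18; 19];
  [:: 4; 12; 20; 28]; [:: 4; 12; 22; 24]; [:: 4; 12; 23; 31]; [:: 4; 12; 26; 27];
  [:: 4; 13; 14; 19]; [:: 4; 13; 17; 24]; [:: 4; 13; 18; 27]; [:: 4; 13; 21; 23];
  [:: 4; 13; 22; 31]; [:: 4; 13; 28; 30]; [:: 4; 14; 15; 26]; [:: 4; 14; 18; 24];
  [:: 4; 14; 21; 31]; [:: 4; 14; 22; 23]; [:: 4; 14; 28; 29]; [:: 4; 15; 16; 27];
  [:: 4; 15; 18; 21]; [:: 4; 15; 19; 24]; [:: 4; 15; 22; 29]; [:: 4; 15; 25; 30];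
  [:: 4; 16; 17; 26]; [:: 4; 16; 25; 28]; [:: 4; 16; 29; 31]; [:: 4; 17; 18; 29];
  [:: 4; 17; 20; 30]; [:: 4; 17; 23; 27]; [:: 4; 18; 20; 31]; [:: 4; 18; 23; 28];
  [:: 4; 19; 25; 26]; [:: 4; 20; 25; 29]; [:: 4; 21; 24; 27]; [:: 4; 21; 26; 29];
  [:: 4; 23; 24; 25]; [:: 4; 25; 27; 31]; [:: 5; 6; 8; 25]; [:: 5; 6; 9; 16];
  [:: 5; 6; 10; 19]; [:: 5; 6; 11; 26]; [:: 5; 6; 12; 27]; [:: 5; 6; 15; 24];
  [:: 5; 6; 17; 23]; [:: 5; 6; 18; 20]; [:: 5; 6; 21; 22]; [:: 5; 6; 28; 31];
  [:: 5; 6; 29; 30]; [:: 5; 7; 8; 28]; [:: 5; 7; 9; 11]; [:: 5; 7; 10; 30]; [:: 5; 7; 12; 14];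
  [:: 5; 7; 13; 15]; [:: 5; 7; 16; 18]; [:: 5; 7; 17; 21]; [:: 5; 7; 19; 23];
  [:: 5; 7; 20; 29]; [:: 5; 7; 22; 31]; [:: 5; 7; 25; 27]; [:: 5; 8; 10; 17];
  [:: 5; 8; 11; 20]; [:: 5; 8; 12; 21]; [:: 5; 8; 14; 30]; [:: 5; 8; 16; 29];
  [:: 5; 8; 18; 31]; [:: 5; 8; 22; 27]; [:: 5; 8; 23; 26]; [:: 5; 9; 10; 28];
  [:: 5; 9; 12; 17]; [:: 5; 9; 13; 14]; [:: 5; 9; 15; 26]; [:: 5; 9; 18; 23];
  [:: 5; 9; 19; 31]; [:: 5; 9; 20; 24]; [:: 5; 9; 21; 25]; [:: 5; 9; 27; 30];
  [:: 5; 10; 11; 22]; [:: 5; 10; 13; 20]; [:: 5; 10; 15; 31]; [:: 5; 10; 18; 29];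
  [:: 5; 10; 21; 26]; [:: 5; 10; 23; 24]; [:: 5; 11; 12; 13]; [:: 5; 11; 14; 29];
  [:: 5; 11; 16; 30]; [:: 5; 11; 17; 25]; [:: 5; 11; 18; 28]; [:: 5; 11; 21; 27];
  [:: 5; 11; 23; 31]; [:: 5; 12; 15; 18]; [:: 5; 12; 16; 25]; [:: 5; 12; 19; 26];
  [:: 5; 12; 20; 22]; [:: 5; 12; 23; 30]; [:: 5; 12; 29; 31]; [:: 5; 13; 16; 24];
  [:: 5; 13; 17; 31]; [:: 5; 13; 18; 19]; [:: 5; 13; 21; 29]; [:: 5; 13; 22; 30];
  [:: 5; 13; 23; 25]; [:: 5; 13; 26; 27]; [:: 5; 14; 15; 27]; [:: 5; 14; 17; 26];
  [:: 5; 14; 18; 25]; [:: 5; 14; 19; 20]; [:: 5; 14; 23; 28]; [:: 5; 14; 24; 31];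
  [:: 5; 15; 19; 25]; [:: 5; 15; 20; 30]; [:: 5; 15; 22; 23]; [:: 5; 15; 28; 29];
  [:: 5; 16; 17; 27]; [:: 5; 16; 19; 28]; [:: 5; 16; 21; 31]; [:: 5; 16; 22; 26];
  [:: 5; 17; 24; 29]; [:: 5; 17; 28; 30]; [:: 5; 18; 24; 27]; [:: 5; 19; 21; 30];
  [:: 5; 19; 22; 29]; [:: 5; 20; 25; 26]; [:: 5; 20; 27; 28]; [:: 5; 21; 24; 28];
  [:: 5; 22; 24; 25]; [:: 5; 24; 26; 30]; [:: 6; 7; 8; 27]; [:: 6; 7; 9; 26];
  [:: 6; 7; 10; 11]; [:: 6; 7; 12; 18]; [:: 6; 7; 13; 19]; [:: 6; 7; 16; 24];
  [:: 6; 7; 17; 25]; [:: 6; 7; 20; 30]; [:: 6; 7; 21; 31]; [:: 6; 7; 22; 23];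
  [:: 6; 7; 28; 29]; [:: 6; 8; 9; 21]; [:: 6; 8; 11; 23]; [:: 6; 8; 13; 30]; [:: 6; 8; 14; 15];
  [:: 6; 8; 17; 31]; [:: 6; 8; 18; 26]; [:: 6; 8; 19; 29]; [:: 6; 8; 20; 28];
  [:: 6; 8; 22; 24]; [:: 6; 9; 10; 31]; [:: 6; 9; 11; 18]; [:: 6; 9; 12; 28];
  [:: 6; 9; 14; 23]; [:: 6; 9; 17; 30]; [:: 6; 9; 20; 27]; [:: 6; 9; 22; 25];
  [:: 6; 10; 12; 25]; [:: 6; 10; 13; 14]; [:: 6; 10; 15; 18]; [:: 6; 10; 16; 28];
  [:: 6; 10; 17; 20]; [:: 6; 10; 22; 26]; [:: 6; 10; 23; 27]; [:: 6; 10; 24; 29];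
  [:: 6; 11; 13; 29]; [:: 6; 11; 15; 22]; [:: 6; 11; 17; 28]; [:: 6; 11; 19; 30];
  [:: 6; 11; 20; 25]; [:: 6; 11; 21; 24]; [:: 6; 12; 13; 24]; [:: 6; 12; 15; 17];
  [:: 6; 12; 16; 26]; [:: 6; 12; 20; 21]; [:: 6; 12; 23; 29]; [:: 6; 12; 30; 31];
  [:: 6; 13; 16; 23]; [:: 6; 13; 17; 26]; [:: 6; 13; 18; 25]; [:: 6; 13; 20; 31];
  [:: 6; 13; 27; 28]; [:: 6; 14; 16; 17]; [:: 6; 14; 18; 28]; [:: 6; 14; 19; 27];
  [:: 6; 14; 20; 26]; [:: 6; 14; 21; 29]; [:: 6; 14; 22; 30]; [:: 6; 14; 24; 25];
  [:: 6; 15; 16; 25]; [:: 6; 15; 19; 26]; [:: 6; 15; 20; 29]; [:: 6; 15; 21; 23];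
  [:: 6; 15; 28; 30]; [:: 6; 16; 19; 31]; [:: 6; 16; 21; 30]; [:: 6; 16; 22; 29];
  [:: 6; 17; 24; 27]; [:: 6; 18; 19; 24]; [:: 6; 18; 27; 30]; [:: 6; 18; 29; 31];
  [:: 6; 19; 21; 25]; [:: 6; 19; 22; 28]; [:: 6; 21; 26; 27]; [:: 6; 22; 27; 31];
  [:: 6; 23; 24; 31]; [:: 6; 23; 25; 26]; [:: 6; 25; 27; 29]; [:: 7; 8; 9; 20];
  [:: 7; 8; 10; 19]; [:: 7; 8; 11; 30]; [:: 7; 8; 13; 29]; [:: 7; 8; 15; 22];
  [:: 7; 8; 16; 31]; [:: 7; 8; 21; 26]; [:: 7; 8; 23; 24]; [:: 7; 9; 10; 22];
  [:: 7; 9; 12; 31]; [:: 7; 9; 14; 15]; [:: 7; 9; 16; 30]; [:: 7; 9; 18; 28];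
  [:: 7; 9; 19; 27]; [:: 7; 9; 21; 29]; [:: 7; 9; 23; 25]; [:: 7; 10; 12; 28];
  [:: 7; 10; 14; 23]; [:: 7; 10; 16; 29]; [:: 7; 10; 18; 31]; [:: 7; 10; 20; 25];
  [:: 7; 10; 21; 24]; [:: 7; 11; 12; 15]; [:: 7; 11; 13; 24]; [:: 7; 11; 14; 19];
  [:: 7; 11; 16; 21]; [:: 7; 11; 17; 29]; [:: 7; 11; 22; 26]; [:: 7; 11; 23; 27];
  [:: 7; 11; 25; 28]; [:: 7; 12; 13; 25]; [:: 7; 12; 16; 27]; [:: 7; 12; 17; 22];
  [:: 7; 12; 19; 24]; [:: 7; 12; 21; 30]; [:: 7; 12; 26; 29]; [:: 7; 13; 14; 16];
  [:: 7; 13; 17; 27]; [:: 7; 13; 20; 21]; [:: 7; 13; 22; 28]; [:: 7; 13; 30; 31];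
  [:: 7; 14; 17; 24]; [:: 7; 14; 18; 27]; [:: 7; 14; 20; 22]; [:: 7; 14; 21; 28];
  [:: 7; 14; 29; 31]; [:: 7; 15; 16; 17]; [:: 7; 15; 18; 26]; [:: 7; 15; 19; 29];
  [:: 7; 15; 20; 28]; [:: 7; 15; 21; 27]; [:: 7; 15; 23; 31]; [:: 7; 15; 24; 25];
  [:: 7; 16; 25; 26]; [:: 7; 17; 18; 30]; [:: 7; 17; 20; 31]; [:: 7; 17; 23; 28];
  [:: 7; 18; 19; 25]; [:: 7; 18; 20; 24]; [:: 7; 18; 23; 29]; [:: 7; 19; 26; 31];
  [:: 7; 19; 28; 30]; [:: 7; 20; 26; 27]; [:: 7; 22; 24; 27]; [:: 7; 22; 25; 30];
  [:: 7; 23; 26; 30]; [:: 7; 24; 26; 28]; [:: 8; 9; 10; 11]; [:: 8; 9; 12; 13];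
  [:: 8; 9; 16; 26]; [:: 8; 9; 17; 27]; [:: 8; 9; 18; 19]; [:: 8; 9; 22; 30];
  [:: 8; 9; 23; 31]; [:: 8; 9; 24; 25]; [:: 8; 10; 12; 23]; [:: 8; 10; 13; 15];
  [:: 8; 10; 14; 21]; [:: 8; 10; 16; 25]; [:: 8; 10; 18; 27]; [:: 8; 10; 20; 22];
  [:: 8; 10; 24; 28]; [:: 8; 10; 26; 30]; [:: 8; 10; 29; 31]; [:: 8; 11; 13; 14];
  [:: 8; 11; 16; 19]; [:: 8; 11; 17; 18]; [:: 8; 11; 24; 27]; [:: 8; 11; 25; 31];
  [:: 8; 11; 26; 28]; [:: 8; 12; 14; 19]; [:: 8; 12; 16; 20]; [:: 8; 12; 18; 22];
  [:: 8; 12; 24; 26]; [:: 8; 12; 25; 29]; [:: 8; 12; 27; 31]; [:: 8; 12; 28; 30];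
  [:: 8; 13; 17; 23]; [:: 8; 13; 18; 20]; [:: 8; 13; 19; 31]; [:: 8; 13; 22; 26];
  [:: 8; 13; 25; 28]; [:: 8; 14; 16; 22]; [:: 8; 14; 17; 20]; [:: 8; 14; 18; 23];
  [:: 8; 14; 25; 26]; [:: 8; 14; 28; 31]; [:: 8; 15; 16; 23]; [:: 8; 15; 18; 25];
  [:: 8; 15; 19; 20]; [:: 8; 15; 21; 30]; [:: 8; 15; 24; 31]; [:: 8; 15; 26; 29];
  [:: 8; 15; 27; 28]; [:: 8; 16; 21; 28]; [:: 8; 16; 27; 30]; [:: 8; 17; 19; 28];
  [:: 8; 17; 21; 24]; [:: 8; 17; 22; 25]; [:: 8; 17; 29; 30]; [:: 8; 18; 24; 29];
  [:: 8; 19; 21; 23]; [:: 8; 19; 24; 30]; [:: 8; 20; 21; 27]; [:: 8; 20; 23; 25];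
  [:: 8; 21; 22; 31]; [:: 8; 22; 28; 29]; [:: 8; 23; 27; 29]; [:: 9; 10; 12; 15];
  [:: 9; 10; 16; 19]; [:: 9; 10; 17; 18]; [:: 9; 10; 24; 30]; [:: 9; 10; 25; 26];
  [:: 9; 10; 27; 29]; [:: 9; 11; 12; 14]; [:: 9; 11; 13; 22]; [:: 9; 11; 15; 20];
  [:: 9; 11; 17; 24]; [:: 9; 11; 19; 26]; [:: 9; 11; 21; 23]; [:: 9; 11; 25; 29];
  [:: 9; 11; 27; 31]; [:: 9; 11; 28; 30]; [:: 9; 12; 16; 22]; [:: 9; 12; 18; 30];
  [:: 9; 12; 19; 21]; [:: 9; 12; 23; 27]; [:: 9; 12; 24; 29]; [:: 9; 13; 15; 18];
  [:: 9; 13; 17; 21]; [:: 9; 13; 19; 23]; [:: 9; 13; 24; 28]; [:: 9; 13; 25; 27];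
  [:: 9; 13; 26; 30]; [:: 9; 13; 29; 31]; [:: 9; 14; 17; 22]; [:: 9; 14; 18; 21];
  [:: 9; 14; 19; 24]; [:: 9; 14; 20; 31]; [:: 9; 14; 25; 30]; [:: 9; 14; 26; 29];
  [:: 9; 14; 27; 28]; [:: 9; 15; 16; 21]; [:: 9; 15; 17; 23]; [:: 9; 15; 19; 22];
  [:: 9; 15; 24; 27]; [:: 9; 15; 29; 30]; [:: 9; 16; 18; 29]; [:: 9; 16; 20; 25];
  [:: 9; 16; 23; 24]; [:: 9; 16; 28; 31]; [:: 9; 17; 20; 29]; [:: 9; 17; 26; 31];
  [:: 9; 18; 20; 22]; [:: 9; 18; 25; 31]; [:: 9; 19; 25; 28]; [:: 9; 20; 21; 26];
  [:: 9; 20; 23; 30]; [:: 9; 21; 22; 24]; [:: 9; 22; 26; 28]; [:: 9; 23; 28; 29];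
  [:: 10; 11; 14; 15]; [:: 10; 11; 16; 17]; [:: 10; 11; 18; 24]; [:: 10; 11; 19; 25];
  [:: 10; 11; 20; 28]; [:: 10; 11; 21; 29]; [:: 10; 11; 26; 27]; [:: 10; 12; 14; 17];
  [:: 10; 12; 16; 21]; [:: 10; 12; 18; 20]; [:: 10; 12; 19; 22]; [:: 10; 12; 24; 27];
  [:: 10; 12; 29; 30]; [:: 10; 13; 16; 27]; [:: 10; 13; 17; 22]; [:: 10; 13; 18; 21];
  [:: 10; 13; 23; 28]; [:: 10; 13; 24; 31]; [:: 10; 13; 25; 30]; [:: 10; 13; 26; 29];
  [:: 10; 14; 16; 20]; [:: 10; 14; 18; 22]; [:: 10; 14; 24; 26]; [:: 10; 14; 25; 29];
  [:: 10; 14; 27; 31]; [:: 10; 14; 28; 30]; [:: 10; 15; 16; 22]; [:: 10; 15; 17; 29];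
  [:: 10; 15; 19; 21]; [:: 10; 15; 20; 24]; [:: 10; 15; 27; 30]; [:: 10; 16; 26; 31];
  [:: 10; 17; 19; 30]; [:: 10; 17; 21; 23]; [:: 10; 17; 26; 28]; [:: 10; 18; 23; 30];
  [:: 10; 18; 25; 28]; [:: 10; 19; 20; 27]; [:: 10; 19; 23; 26]; [:: 10; 19; 28; 31];
  [:: 10; 20; 23; 29]; [:: 10; 20; 30; 31]; [:: 10; 21; 22; 27]; [:: 10; 21; 25; 31];
  [:: 10; 22; 23; 25]; [:: 11; 12; 16; 23]; [:: 11; 12; 17; 26]; [:: 11; 12; 19; 20];
  [:: 11; 12; 22; 29]; [:: 11; 12; 24; 31]; [:: 11; 12; 25; 30]; [:: 11; 12; 27; 28];
  [:: 11; 13; 15; 16]; [:: 11; 13; 17; 20]; [:: 11; 13; 18; 23]; [:: 11; 13; 19; 21];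
  [:: 11; 13; 25; 26]; [:: 11; 13; 28; 31]; [:: 11; 14; 16; 28]; [:: 11; 14; 17; 23];
  [:: 11; 14; 18; 20]; [:: 11; 14; 21; 25]; [:: 11; 14; 26; 31]; [:: 11; 15; 17; 21];
  [:: 11; 15; 19; 23]; [:: 11; 15; 24; 28]; [:: 11; 15; 25; 27]; [:: 11; 15; 26; 30];
  [:: 11; 15; 29; 31]; [:: 11; 16; 18; 31]; [:: 11; 16; 20; 22]; [:: 11; 16; 27; 29];
  [:: 11; 17; 27; 30]; [:: 11; 18; 21; 26]; [:: 11; 18; 22; 27]; [:: 11; 18; 29; 30];
  [:: 11; 19; 22; 31]; [:: 11; 19; 24; 29]; [:: 11; 20; 23; 26]; [:: 11; 20; 24; 30];
  [:: 11; 21; 22; 28]; [:: 11; 21; 30; 31]; [:: 11; 22; 23; 24]; [:: 12; 13; 14; 15];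
  [:: 12; 13; 18; 26]; [:: 12; 13; 19; 27]; [:: 12; 13; 20; 30]; [:: 12; 13; 21; 31];
  [:: 12; 13; 22; 23]; [:: 12; 13; 28; 29]; [:: 12; 14; 16; 18]; [:: 12; 14; 20; 29];
  [:: 12; 14; 22; 31]; [:: 12; 14; 24; 28]; [:: 12; 14; 25; 27]; [:: 12; 14; 26; 30];
  [:: 12; 15; 20; 23]; [:: 12; 15; 21; 22]; [:: 12; 15; 24; 30]; [:: 12; 15; 27; 29];
  [:: 12; 15; 28; 31]; [:: 12; 16; 17; 31]; [:: 12; 16; 19; 29]; [:: 12; 17; 18; 27];
  [:: 12; 17; 19; 23]; [:: 12; 17; 20; 24]; [:: 12; 17; 21; 28]; [:: 12; 18; 21; 29];
  [:: 12; 18; 24; 25]; [:: 12; 19; 25; 31]; [:: 12; 20; 26; 31]; [:: 12; 21; 23; 24];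
  [:: 12; 21; 25; 26]; [:: 12; 22; 25; 28]; [:: 12; 23; 26; 28]; [:: 13; 14; 20; 23];
  [:: 13; 14; 21; 22]; [:: 13; 14; 25; 31]; [:: 13; 14; 26; 28]; [:: 13; 14; 29; 30];
  [:: 13; 15; 17; 19]; [:: 13; 15; 21; 28]; [:: 13; 15; 23; 30]; [:: 13; 15; 24; 26];
  [:: 13; 15; 25; 29]; [:: 13; 15; 27; 31]; [:: 13; 16; 17; 30]; [:: 13; 16; 18; 22];
  [:: 13; 16; 19; 26]; [:: 13; 16; 20; 29]; [:: 13; 16; 21; 25]; [:: 13; 17; 18; 28];
  [:: 13; 18; 24; 30]; [:: 13; 19; 20; 28]; [:: 13; 19; 24; 25]; [:: 13; 20; 22; 25];
  [:: 13; 20; 24; 27]; [:: 13; 21; 27; 30]; [:: 13; 22; 27; 29]; [:: 13; 23; 24; 29];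
  [:: 14; 15; 16; 24]; [:: 14; 15; 17; 25]; [:: 14; 15; 20; 21]; [:: 14; 15; 22; 28];
  [:: 14; 15; 23; 29]; [:: 14; 15; 30; 31]; [:: 14; 16; 19; 25]; [:: 14; 16; 23; 31];
  [:: 14; 16; 26; 27]; [:: 14; 17; 18; 31]; [:: 14; 17; 19; 21]; [:: 14; 17; 27; 29];
  [:: 14; 18; 19; 29]; [:: 14; 19; 22; 26]; [:: 14; 19; 23; 30]; [:: 14; 20; 27; 30];
  [:: 14; 21; 23; 26]; [:: 14; 21; 24; 30]; [:: 14; 22; 24; 29]; [:: 14; 23; 24; 27];
  [:: 15; 16; 18; 20]; [:: 15; 16; 19; 30]; [:: 15; 16; 26; 28]; [:: 15; 17; 18; 24];
  [:: 15; 17; 22; 30]; [:: 15; 17; 26; 27]; [:: 15; 18; 19; 28]; [:: 15; 18; 22; 31];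
  [:: 15; 18; 23; 27]; [:: 15; 20; 22; 27]; [:: 15; 20; 25; 31]; [:: 15; 21; 26; 31];
  [:: 15; 22; 25; 26]; [:: 15; 23; 25; 28]; [:: 16; 17; 18; 19]; [:: 16; 17; 20; 21];
  [:: 16; 17; 22; 24]; [:: 16; 17; 23; 25]; [:: 16; 17; 28; 29]; [:: 16; 18; 21; 23];
  [:: 16; 18; 24; 26]; [:: 16; 18; 25; 27]; [:: 16; 18; 28; 30]; [:: 16; 19; 20; 24];
  [:: 16; 19; 21; 22]; [:: 16; 19; 23; 27]; [:: 16; 20; 23; 28]; [:: 16; 20; 26; 30];
  [:: 16; 20; 27; 31]; [:: 16; 21; 24; 29]; [:: 16; 22; 23; 30]; [:: 16; 22; 25; 31];
  [:: 16; 23; 26; 29]; [:: 16; 24; 25; 30]; [:: 16; 24; 27; 28]; [:: 17; 18; 20; 23];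
  [:: 17; 18; 21; 25]; [:: 17; 18; 22; 26]; [:: 17; 19; 20; 22]; [:: 17; 19; 24; 26];
  [:: 17; 19; 25; 27]; [:: 17; 19; 29; 31]; [:: 17; 20; 25; 28]; [:: 17; 21; 22; 29];
  [:: 17; 21; 26; 30]; [:: 17; 21; 27; 31]; [:: 17; 22; 23; 31]; [:: 17; 22; 27; 28];
  [:: 17; 23; 24; 30]; [:: 17; 24; 25; 31]; [:: 17; 25; 26; 29]; [:: 18; 19; 20; 26];
  [:: 18; 19; 21; 27]; [:: 18; 19; 22; 23]; [:: 18; 19; 30; 31]; [:: 18; 20; 21; 28];
  [:: 18; 20; 27; 29]; [:: 18; 21; 22; 30]; [:: 18; 21; 24; 31]; [:: 18; 22; 24; 28];
  [:: 18; 22; 25; 29]; [:: 18; 23; 26; 31]; [:: 18; 25; 26; 30]; [:: 18; 26; 27; 28];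
  [:: 19; 20; 21; 29]; [:: 19; 20; 23; 31]; [:: 19; 20; 25; 30]; [:: 19; 21; 26; 28];
  [:: 19; 22; 27; 30]; [:: 19; 23; 24; 28]; [:: 19; 23; 25; 29]; [:: 19; 24; 27; 31];
  [:: 19; 26; 27; 29]; [:: 20; 21; 22; 23]; [:: 20; 21; 24; 25]; [:: 20; 22; 24; 26];
  [:: 20; 22; 28; 30]; [:: 20; 22; 29; 31]; [:: 20; 24; 28; 31]; [:: 20; 26; 28; 29];
  [:: 21; 23; 25; 27]; [:: 21; 23; 28; 30]; [:: 21; 23; 29; 31]; [:: 21; 25; 29; 30];
  [:: 21; 27; 28; 29]; [:: 22; 23; 26; 27]; [:: 22; 24; 30; 31]; [:: 22; 26; 29; 30];
  [:: 23; 25; 30; 31]; [:: 23; 27; 28; 31]; [:: 24; 25; 26; 27]; [:: 24; 25; 28; 29];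
  [:: 24; 26; 29; 31]; [:: 24; 27; 29; 30]; [:: 25; 26; 28; 31]; [:: 25; 27; 28; 30];
  [:: 26; 27; 30; 31]; [:: 28; 29; 30; 31]].

Definition sqs32_colorings : seq (seq nat) := [::
  [:: 7; 8; 1; 13; 2; 14; 5; 3; 10; 9; 12; 0; 4; 11; 6; 1; 9; 8; 11; 5; 4; 13; 0; 10; 6; 14; 3;
      2; 15; 4; 3; 0; 12; 14; 13; 9; 6; 11; 1; 10; 5; 8; 2; 14; 7; 10; 12; 6; 11; 2; 5; 15; 9;
      3; 0; 2; 6; 0; 13; 11; 10; 1; 4; 7; 5; 12; 14; 5; 2; 7; 11; 12; 6; 13; 0; 10; 4; 9; 6;
      15; 3; 4; 12; 10; 11; 2; 14; 1; 7; 9; 14; 15; 0; 10; 13; 12; 8; 5; 1; 14; 3; 8; 9; 11; 0;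
      4; 8; 10; 5; 3; 6; 13; 9; 4; 2; 7; 1; 3; 12; 10; 8; 6; 0; 3; 1; 2; 1; 12; 8; 14; 0; 7; 9;
      13; 11; 8; 15; 14; 7; 4; 13; 8; 12; 5; 11; 2; 4; 5; 7; 6; 1; 7; 3; 9; 13];
  [:: 7; 8; 13; 1; 14; 2; 5; 10; 3; 9; 0; 12; 11; 4; 6; 3; 4; 0; 12; 14; 9; 13; 11; 6; 10; 1;
      5; 2; 8; 9; 1; 8; 5; 11; 13; 4; 0; 6; 10; 3; 14; 2; 15; 6; 2; 13; 0; 11; 1; 10; 4; 7; 5;
      12; 14; 7; 14; 10; 6; 12; 11; 5; 2; 15; 9; 3; 0; 5; 6; 15; 3; 12; 4; 11; 10; 2; 14; 1; 2;
      11; 7; 6; 12; 13; 0; 4; 10; 9; 7; 1; 3; 14; 8; 9; 11; 0; 4; 9; 14; 15; 10; 0; 12; 13; 8;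
      5; 8; 4; 2; 7; 1; 3; 12; 10; 10; 5; 3; 6; 13; 9; 12; 1; 14; 8; 0; 7; 8; 0; 6; 3; 1; 2; 9;
      7; 4; 13; 13; 11; 15; 8; 14; 11; 2; 8; 12; 5; 4; 5; 7; 6; 3; 7; 1; 9; 13];
  [:: 7; 8; 9; 1; 11; 5; 4; 0; 13; 14; 3; 10; 6; 2; 15; 3; 0; 4; 14; 12; 6; 11; 13; 9; 5; 1;
      10; 2; 8; 1; 13; 8; 2; 14; 3; 10; 5; 12; 0; 9; 4; 11; 6; 5; 14; 7; 11; 2; 12; 6; 13; 0;
      9; 10; 4; 7; 15; 6; 3; 10; 11; 4; 12; 2; 1; 14; 12; 6; 10; 11; 2; 15; 5; 9; 0; 3; 0; 13;
      2; 6; 10; 1; 11; 7; 4; 5; 14; 12; 8; 1; 5; 10; 6; 3; 13; 9; 9; 2; 4; 1; 7; 12; 3; 10; 7;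
      14; 0; 10; 15; 8; 13; 12; 5; 14; 3; 9; 8; 0; 11; 4; 9; 1; 11; 13; 14; 8; 15; 8; 12; 4; 7;
      13; 3; 6; 0; 1; 2; 8; 14; 7; 0; 5; 4; 7; 12; 8; 5; 11; 2; 3; 9; 6; 7; 1; 13];
  [:: 7; 0; 3; 4; 14; 12; 11; 6; 9; 13; 1; 5; 10; 8; 2; 9; 8; 1; 5; 11; 0; 4; 13; 3; 14; 6; 10;
      2; 15; 13; 1; 8; 14; 2; 10; 3; 5; 0; 12; 9; 11; 4; 6; 5; 7; 15; 6; 3; 11; 10; 12; 4; 2;
      1; 14; 14; 11; 7; 2; 6; 12; 13; 0; 9; 4; 10; 13; 0; 6; 2; 1; 10; 11; 7; 4; 5; 14; 12; 6;
      12; 10; 11; 15; 2; 5; 9; 0; 3; 8; 9; 2; 4; 1; 7; 12; 3; 10; 1; 5; 10; 6; 3; 13; 9; 7; 3;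
      14; 8; 9; 0; 11; 4; 14; 10; 0; 15; 8; 12; 13; 5; 9; 12; 8; 4; 7; 13; 1; 11; 13; 14; 15;
      8; 14; 8; 7; 0; 3; 0; 6; 1; 2; 5; 4; 7; 11; 2; 12; 8; 5; 9; 3; 6; 7; 1; 13];
  [:: 8; 14; 7; 1; 4; 11; 12; 6; 10; 9; 5; 15; 2; 3; 0; 3; 9; 11; 2; 10; 1; 6; 0; 13; 4; 5; 7;
      14; 12; 5; 1; 8; 12; 6; 2; 7; 11; 0; 13; 4; 10; 9; 13; 0; 15; 3; 6; 11; 10; 2; 4; 12; 1;
      14; 7; 5; 3; 10; 2; 14; 4; 11; 9; 12; 0; 6; 4; 13; 0; 11; 5; 10; 2; 14; 6; 3; 15; 13; 9;
      6; 11; 12; 14; 5; 10; 1; 8; 2; 8; 9; 14; 10; 1; 3; 6; 0; 2; 1; 12; 3; 4; 0; 7; 8; 14; 9;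
      7; 2; 8; 15; 14; 13; 11; 14; 5; 13; 7; 4; 13; 12; 8; 15; 0; 10; 5; 1; 11; 0; 8; 9; 4; 8;
      13; 3; 6; 9; 3; 7; 12; 1; 10; 6; 1; 7; 3; 8; 4; 12; 5; 9; 5; 2; 11; 7; 13];
  [:: 8; 9; 3; 2; 11; 1; 10; 6; 13; 0; 4; 5; 7; 14; 12; 7; 14; 4; 1; 11; 6; 12; 10; 5; 9; 15;
      2; 3; 0; 5; 13; 0; 15; 3; 6; 10; 11; 4; 2; 12; 1; 14; 1; 8; 6; 12; 2; 11; 7; 0; 13; 4; 9;
      10; 7; 5; 10; 3; 14; 2; 11; 4; 9; 0; 12; 6; 9; 13; 11; 6; 12; 14; 5; 10; 1; 2; 8; 13; 4;
      0; 5; 11; 2; 10; 14; 6; 3; 15; 12; 1; 3; 4; 0; 7; 14; 8; 8; 14; 9; 10; 3; 1; 0; 6; 2; 9;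
      14; 5; 13; 7; 4; 7; 2; 15; 8; 14; 13; 11; 1; 11; 0; 8; 9; 4; 12; 13; 8; 15; 10; 0; 5; 8;
      3; 12; 7; 1; 10; 13; 3; 6; 9; 6; 3; 8; 4; 1; 7; 9; 12; 5; 2; 11; 5; 7; 13];
  [:: 5; 14; 3; 8; 1; 2; 12; 6; 7; 11; 0; 13; 10; 9; 4; 7; 9; 0; 13; 3; 15; 6; 2; 4; 11; 10;
      12; 14; 1; 8; 1; 4; 12; 6; 11; 10; 9; 15; 5; 2; 0; 3; 10; 1; 11; 2; 0; 13; 6; 5; 4; 7;
      12; 14; 7; 4; 0; 13; 11; 5; 14; 2; 10; 3; 6; 15; 6; 11; 13; 9; 14; 12; 10; 5; 1; 2; 8; 3;
      10; 5; 2; 14; 4; 11; 12; 0; 9; 6; 9; 1; 2; 7; 14; 8; 15; 11; 13; 8; 12; 5; 14; 13; 4; 7;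
      10; 9; 14; 1; 3; 6; 0; 2; 4; 3; 7; 0; 8; 14; 8; 1; 13; 6; 3; 9; 7; 12; 3; 1; 10; 8; 13;
      12; 0; 10; 15; 5; 0; 11; 9; 8; 4; 3; 5; 12; 9; 6; 1; 7; 4; 8; 7; 5; 11; 2; 13];
  [:: 5; 9; 7; 0; 13; 3; 15; 6; 4; 2; 10; 11; 12; 14; 1; 3; 14; 8; 1; 2; 6; 12; 11; 7; 0; 13;
      9; 10; 4; 8; 1; 10; 2; 11; 13; 0; 6; 5; 4; 7; 12; 14; 4; 1; 6; 12; 11; 10; 15; 9; 5; 2;
      0; 3; 7; 11; 6; 9; 13; 14; 12; 10; 5; 1; 8; 2; 0; 4; 13; 5; 11; 2; 14; 10; 3; 6; 15; 10;
      3; 5; 14; 2; 11; 4; 0; 12; 9; 6; 9; 12; 8; 5; 14; 13; 4; 7; 1; 2; 7; 14; 15; 8; 11; 13;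
      4; 3; 7; 0; 14; 8; 9; 10; 14; 3; 1; 0; 6; 2; 8; 12; 7; 3; 1; 10; 1; 13; 6; 3; 9; 0; 11;
      8; 9; 4; 8; 12; 13; 10; 0; 15; 5; 9; 3; 5; 12; 6; 4; 8; 1; 7; 7; 2; 11; 5; 13];
  [:: 7; 11; 9; 2; 14; 1; 4; 6; 15; 13; 10; 0; 12; 5; 8; 1; 5; 14; 3; 2; 13; 12; 10; 6; 4; 9;
      11; 0; 8; 8; 10; 15; 12; 5; 2; 14; 0; 7; 9; 3; 13; 6; 4; 2; 6; 14; 0; 13; 11; 1; 10; 12;
      3; 7; 5; 4; 8; 13; 7; 11; 12; 1; 2; 6; 0; 3; 1; 12; 13; 9; 11; 6; 0; 7; 14; 8; 9; 3; 6;
      10; 5; 14; 11; 15; 8; 13; 10; 0; 11; 1; 3; 13; 4; 7; 7; 8; 12; 0; 6; 4; 11; 9; 1; 9; 8;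
      6; 3; 15; 10; 14; 2; 3; 8; 2; 1; 10; 5; 14; 3; 0; 2; 5; 15; 9; 12; 14; 5; 7; 4; 10; 4; 9;
      13; 0; 14; 12; 1; 2; 4; 10; 11; 1; 5; 7; 5; 11; 3; 8; 13; 12; 7; 2; 9; 6; 4];
  [:: 7; 5; 1; 3; 14; 2; 13; 12; 6; 10; 4; 9; 11; 0; 8; 9; 11; 2; 14; 1; 4; 6; 15; 10; 13; 12;
      0; 5; 8; 8; 4; 6; 2; 14; 0; 13; 11; 1; 10; 12; 3; 7; 15; 10; 5; 12; 2; 14; 0; 7; 9; 3;
      13; 6; 5; 12; 1; 9; 13; 11; 6; 0; 7; 8; 14; 8; 4; 13; 11; 7; 12; 2; 1; 0; 6; 3; 9; 10;
      11; 0; 1; 3; 13; 4; 7; 3; 6; 10; 5; 14; 15; 11; 8; 13; 7; 8; 0; 12; 6; 11; 4; 9; 3; 2; 8;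
      10; 1; 5; 9; 1; 8; 6; 3; 15; 10; 14; 2; 12; 5; 14; 7; 4; 14; 3; 0; 5; 2; 15; 9; 14; 1;
      12; 2; 4; 11; 10; 4; 10; 9; 13; 0; 7; 5; 11; 3; 1; 5; 13; 12; 8; 7; 9; 2; 4; 6];
  [:: 8; 11; 1; 12; 5; 10; 15; 14; 2; 7; 0; 3; 9; 13; 6; 9; 5; 2; 6; 4; 0; 14; 11; 13; 10; 1;
      3; 12; 7; 7; 14; 2; 4; 1; 6; 13; 10; 15; 5; 0; 12; 8; 2; 14; 3; 12; 13; 10; 6; 4; 9; 0;
      11; 8; 9; 4; 1; 6; 3; 5; 10; 11; 15; 14; 13; 8; 8; 12; 0; 11; 10; 3; 1; 13; 7; 4; 5; 13;
      12; 7; 11; 1; 2; 6; 0; 3; 13; 9; 6; 11; 7; 0; 14; 8; 7; 8; 9; 1; 3; 6; 15; 14; 10; 2; 3;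
      2; 8; 5; 1; 10; 8; 6; 12; 0; 4; 11; 9; 14; 9; 10; 4; 13; 0; 12; 1; 14; 2; 10; 11; 4; 0;
      3; 2; 15; 5; 9; 14; 5; 12; 7; 4; 8; 7; 13; 12; 1; 5; 11; 5; 3; 9; 6; 2; 4; 7];
  [:: 8; 5; 9; 6; 2; 4; 0; 14; 11; 13; 10; 1; 3; 12; 7; 1; 11; 5; 12; 15; 10; 14; 2; 7; 0; 3;
      9; 13; 6; 7; 2; 3; 14; 12; 13; 6; 10; 9; 4; 0; 11; 8; 14; 2; 4; 1; 6; 10; 13; 15; 5; 12;
      0; 8; 9; 12; 8; 11; 0; 10; 3; 1; 13; 7; 4; 1; 4; 6; 3; 5; 10; 15; 11; 14; 13; 8; 5; 9;
      13; 6; 11; 7; 0; 8; 14; 13; 7; 12; 11; 2; 1; 0; 6; 3; 7; 3; 8; 2; 1; 5; 10; 9; 8; 1; 3;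
      6; 15; 14; 10; 2; 8; 6; 0; 12; 11; 4; 9; 1; 12; 14; 2; 11; 10; 4; 14; 9; 4; 10; 13; 0; 5;
      14; 12; 7; 4; 0; 3; 15; 2; 5; 9; 7; 13; 12; 8; 11; 5; 3; 1; 5; 2; 4; 9; 6; 7];
  [:: 5; 4; 8; 9; 14; 10; 7; 11; 12; 13; 6; 0; 2; 1; 3; 1; 12; 2; 3; 15; 4; 11; 6; 13; 9; 14;
      8; 0; 7; 9; 7; 12; 2; 10; 5; 3; 6; 8; 13; 14; 11; 15; 14; 2; 5; 6; 1; 3; 10; 0; 11; 4; 7;
      13; 11; 4; 1; 6; 0; 12; 5; 15; 13; 10; 8; 1; 5; 10; 6; 13; 12; 11; 0; 4; 9; 8; 8; 0; 7;
      2; 14; 13; 9; 3; 6; 13; 11; 0; 14; 12; 10; 3; 1; 7; 8; 14; 1; 3; 0; 9; 5; 15; 2; 3; 9;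
      14; 7; 12; 5; 4; 8; 4; 10; 9; 0; 13; 1; 2; 14; 12; 11; 10; 4; 7; 4; 11; 12; 0; 6; 9; 15;
      6; 3; 10; 2; 14; 8; 2; 5; 10; 1; 7; 2; 9; 13; 1; 5; 11; 6; 4; 5; 7; 3; 8; 12];
  [:: 5; 12; 1; 3; 2; 4; 15; 11; 6; 9; 13; 8; 14; 0; 7; 8; 4; 14; 9; 10; 11; 7; 12; 13; 0; 6;
      2; 1; 3; 9; 2; 14; 6; 5; 1; 3; 10; 11; 0; 4; 7; 13; 7; 2; 12; 10; 5; 3; 6; 8; 13; 14; 15;
      11; 5; 1; 6; 10; 13; 12; 11; 0; 4; 9; 8; 11; 4; 6; 1; 12; 0; 5; 15; 10; 13; 8; 8; 13; 0;
      11; 14; 10; 12; 3; 1; 7; 0; 7; 2; 14; 13; 9; 3; 6; 8; 9; 3; 14; 12; 7; 5; 4; 14; 1; 3; 0;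
      5; 9; 15; 2; 2; 1; 14; 12; 10; 11; 4; 8; 4; 9; 10; 0; 13; 7; 11; 4; 0; 12; 6; 9; 2; 8; 5;
      10; 1; 15; 6; 3; 2; 10; 14; 7; 13; 9; 5; 1; 2; 4; 11; 6; 7; 3; 5; 12; 8];
  [:: 9; 4; 1; 12; 2; 7; 5; 10; 6; 3; 13; 8; 11; 15; 14; 8; 12; 5; 6; 14; 2; 3; 1; 0; 11; 10;
      7; 4; 13; 5; 10; 9; 14; 12; 7; 11; 13; 2; 6; 0; 1; 3; 15; 4; 2; 3; 6; 11; 13; 9; 14; 8;
      7; 0; 8; 11; 1; 7; 0; 14; 2; 13; 3; 9; 6; 5; 11; 0; 13; 14; 3; 12; 10; 1; 7; 1; 6; 4; 5;
      0; 12; 13; 10; 15; 8; 13; 10; 6; 12; 0; 11; 4; 9; 8; 14; 3; 8; 10; 9; 4; 0; 13; 9; 14; 1;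
      2; 12; 4; 11; 10; 8; 1; 0; 3; 9; 15; 5; 2; 7; 12; 14; 5; 4; 7; 15; 3; 6; 14; 2; 10; 2; 8;
      10; 5; 1; 4; 11; 6; 12; 0; 9; 9; 11; 6; 2; 13; 4; 7; 1; 5; 8; 7; 12; 5; 3];
  [:: 9; 12; 8; 6; 5; 2; 14; 3; 1; 11; 0; 10; 7; 4; 13; 1; 4; 2; 12; 7; 5; 10; 6; 3; 13; 8; 15;
      11; 14; 5; 4; 15; 3; 2; 6; 11; 9; 13; 8; 14; 7; 0; 9; 10; 14; 7; 12; 11; 13; 2; 0; 6; 1;
      3; 8; 5; 0; 11; 13; 14; 3; 10; 12; 1; 7; 1; 11; 7; 0; 14; 2; 13; 3; 9; 6; 13; 6; 10; 12;
      0; 11; 9; 4; 8; 6; 1; 4; 5; 12; 0; 10; 13; 15; 8; 9; 14; 2; 1; 12; 4; 10; 11; 3; 14; 8;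
      9; 10; 4; 0; 13; 8; 12; 7; 14; 5; 4; 1; 0; 3; 15; 9; 5; 2; 7; 8; 2; 10; 5; 1; 15; 3; 6;
      2; 14; 10; 11; 4; 6; 0; 12; 9; 13; 2; 4; 9; 11; 6; 7; 5; 1; 7; 12; 8; 3; 5];
  [:: 9; 2; 1; 10; 8; 12; 4; 15; 5; 6; 13; 7; 0; 11; 3; 13; 8; 4; 5; 7; 10; 6; 11; 12; 3; 2; 0;
      14; 1; 6; 5; 10; 14; 3; 12; 1; 11; 9; 0; 4; 7; 8; 11; 4; 5; 15; 0; 3; 10; 7; 14; 13; 12;
      9; 6; 9; 0; 1; 7; 13; 8; 3; 2; 14; 12; 3; 2; 0; 15; 11; 12; 14; 13; 1; 7; 8; 1; 13; 2; 4;
      0; 11; 10; 6; 13; 14; 7; 5; 12; 9; 11; 1; 9; 4; 8; 3; 10; 14; 11; 2; 2; 4; 12; 13; 10; 6;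
      8; 6; 14; 10; 0; 9; 5; 1; 13; 2; 0; 14; 4; 15; 10; 9; 3; 8; 14; 11; 6; 5; 12; 3; 8; 1; 6;
      10; 7; 8; 1; 13; 5; 9; 11; 5; 4; 4; 3; 0; 7; 12; 6; 2; 5; 2; 15; 7; 9];
  [:: 9; 8; 13; 5; 4; 10; 7; 11; 6; 3; 12; 0; 2; 14; 1; 1; 2; 8; 10; 4; 12; 5; 15; 6; 7; 13; 0;
      11; 3; 6; 4; 11; 15; 5; 0; 10; 3; 7; 14; 13; 12; 9; 10; 5; 3; 14; 1; 12; 9; 11; 4; 0; 8;
      7; 6; 2; 3; 0; 15; 12; 11; 14; 13; 1; 7; 0; 9; 7; 1; 13; 8; 3; 2; 14; 12; 8; 14; 13; 5;
      7; 9; 12; 11; 1; 1; 2; 13; 0; 4; 11; 10; 6; 9; 2; 4; 12; 13; 10; 6; 8; 8; 4; 3; 14; 10;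
      11; 2; 6; 13; 1; 2; 0; 14; 4; 10; 14; 9; 0; 5; 3; 14; 8; 6; 11; 15; 10; 9; 5; 6; 1; 10;
      12; 3; 8; 7; 8; 13; 1; 5; 3; 4; 0; 9; 5; 11; 4; 2; 7; 6; 12; 5; 15; 2; 7; 9];
  [:: 6; 2; 13; 14; 3; 5; 10; 11; 9; 12; 1; 7; 8; 0; 4; 1; 8; 5; 15; 11; 4; 3; 10; 0; 14; 7;
      12; 13; 9; 9; 12; 4; 10; 8; 15; 5; 13; 7; 6; 11; 0; 3; 7; 10; 4; 5; 12; 3; 6; 11; 2; 0;
      14; 1; 8; 9; 3; 1; 4; 0; 13; 2; 11; 6; 10; 0; 2; 7; 5; 13; 14; 9; 11; 12; 1; 6; 13; 7; 1;
      3; 8; 2; 14; 12; 15; 0; 11; 12; 13; 14; 7; 1; 6; 4; 2; 0; 9; 14; 10; 5; 8; 2; 13; 1; 0;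
      14; 4; 9; 10; 14; 3; 11; 2; 12; 4; 13; 6; 10; 8; 5; 15; 12; 3; 8; 1; 6; 10; 9; 10; 8; 14;
      3; 11; 6; 7; 9; 11; 5; 4; 3; 0; 4; 1; 13; 8; 5; 5; 2; 7; 15; 12; 6; 2; 9; 7];
  [:: 6; 8; 1; 15; 5; 4; 11; 10; 3; 0; 14; 7; 12; 13; 9; 13; 2; 3; 14; 10; 5; 9; 11; 1; 12; 8;
      7; 4; 0; 9; 10; 7; 5; 4; 3; 12; 11; 6; 2; 0; 14; 1; 4; 12; 8; 10; 5; 15; 7; 13; 6; 11; 0;
      3; 8; 2; 0; 5; 7; 14; 13; 11; 9; 12; 1; 3; 9; 1; 0; 4; 2; 13; 11; 6; 10; 6; 15; 0; 12;
      11; 13; 14; 7; 1; 7; 13; 1; 3; 8; 2; 14; 12; 6; 8; 13; 2; 1; 0; 14; 4; 2; 4; 9; 0; 10;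
      14; 5; 9; 12; 4; 13; 6; 10; 8; 14; 10; 3; 11; 2; 5; 6; 1; 10; 15; 12; 3; 8; 14; 8; 3; 6;
      11; 9; 10; 7; 0; 3; 4; 9; 5; 11; 4; 13; 1; 8; 5; 5; 7; 15; 2; 2; 6; 12; 9; 7];
  [:: 6; 9; 0; 10; 4; 5; 11; 8; 1; 3; 7; 13; 2; 14; 12; 3; 2; 8; 5; 10; 4; 11; 12; 0; 15; 1; 7;
      14; 13; 8; 12; 7; 14; 5; 13; 2; 4; 0; 1; 10; 6; 11; 4; 10; 3; 15; 12; 9; 11; 13; 14; 7;
      5; 1; 9; 2; 1; 6; 5; 13; 7; 15; 0; 11; 3; 13; 8; 2; 0; 11; 6; 12; 3; 1; 14; 6; 0; 4; 7;
      8; 12; 1; 11; 9; 7; 14; 0; 3; 10; 13; 12; 9; 15; 3; 4; 14; 1; 10; 9; 13; 10; 11; 6; 8; 3;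
      14; 5; 10; 0; 2; 3; 12; 8; 14; 12; 9; 1; 6; 10; 9; 4; 8; 11; 2; 2; 10; 6; 13; 8; 6; 5;
      14; 0; 4; 8; 7; 4; 12; 6; 3; 9; 2; 5; 1; 2; 13; 0; 15; 7; 5; 4; 11; 5; 9; 7];
  [:: 6; 2; 3; 5; 8; 4; 10; 12; 11; 0; 15; 1; 7; 14; 13; 0; 9; 4; 10; 11; 5; 1; 8; 3; 7; 13; 2;
      12; 14; 8; 10; 4; 15; 3; 9; 12; 11; 14; 13; 5; 7; 1; 7; 12; 5; 14; 2; 13; 0; 4; 1; 10; 6;
      11; 9; 8; 13; 0; 2; 11; 6; 3; 12; 1; 14; 1; 2; 5; 6; 7; 13; 15; 0; 11; 3; 6; 7; 14; 0;
      10; 3; 13; 12; 9; 4; 0; 8; 7; 1; 12; 9; 11; 13; 10; 6; 11; 8; 3; 14; 15; 4; 3; 1; 14; 10;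
      9; 5; 12; 14; 9; 1; 6; 10; 10; 2; 0; 3; 12; 8; 9; 2; 10; 6; 13; 8; 8; 4; 11; 2; 6; 14; 0;
      4; 5; 8; 9; 3; 2; 7; 4; 6; 12; 5; 13; 0; 15; 1; 2; 7; 5; 4; 5; 11; 9; 7];
  [:: 8; 9; 3; 14; 5; 12; 7; 4; 0; 13; 2; 1; 6; 10; 11; 0; 2; 3; 15; 4; 10; 9; 11; 12; 7; 5;
      13; 14; 1; 6; 5; 11; 10; 4; 3; 8; 1; 13; 7; 2; 12; 14; 10; 4; 8; 5; 11; 12; 15; 0; 7; 1;
      13; 14; 6; 2; 13; 7; 8; 0; 4; 11; 9; 12; 1; 1; 8; 14; 7; 3; 10; 0; 12; 13; 9; 9; 13; 7;
      6; 5; 15; 11; 0; 3; 11; 2; 0; 12; 3; 6; 1; 14; 5; 15; 0; 2; 10; 3; 12; 8; 13; 9; 14; 12;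
      1; 6; 10; 14; 1; 3; 4; 9; 10; 10; 8; 11; 6; 14; 3; 6; 4; 2; 5; 8; 14; 0; 4; 9; 11; 2; 6;
      10; 13; 8; 5; 3; 1; 2; 7; 9; 0; 13; 15; 8; 4; 12; 6; 2; 7; 4; 11; 5; 5; 7; 9];
  [:: 8; 2; 0; 15; 3; 10; 4; 11; 9; 12; 5; 7; 14; 13; 1; 3; 9; 5; 14; 7; 12; 0; 4; 2; 13; 1; 6;
      10; 11; 6; 4; 10; 5; 8; 12; 11; 15; 0; 7; 1; 13; 14; 11; 5; 4; 10; 3; 1; 8; 7; 13; 2; 12;
      14; 6; 8; 1; 14; 7; 10; 3; 0; 12; 13; 9; 13; 2; 8; 7; 4; 0; 9; 11; 1; 12; 9; 2; 11; 0; 3;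
      12; 6; 14; 1; 7; 13; 5; 6; 15; 11; 0; 3; 5; 13; 9; 12; 14; 1; 6; 10; 15; 2; 0; 10; 3; 12;
      8; 10; 8; 6; 11; 14; 3; 1; 14; 4; 3; 9; 10; 6; 8; 14; 0; 4; 2; 4; 5; 9; 6; 10; 13; 8; 11;
      2; 5; 9; 7; 0; 13; 15; 3; 1; 2; 8; 2; 4; 6; 12; 7; 4; 5; 11; 5; 7; 9];
  [:: 9; 4; 8; 3; 1; 10; 14; 15; 6; 12; 5; 0; 13; 2; 11; 2; 7; 4; 5; 11; 12; 1; 0; 3; 14; 6;
      10; 8; 13; 6; 14; 10; 0; 9; 8; 12; 11; 3; 13; 1; 7; 5; 1; 13; 2; 12; 3; 9; 10; 15; 5; 4;
      0; 14; 7; 15; 2; 6; 0; 8; 11; 13; 12; 9; 10; 9; 0; 4; 12; 2; 6; 14; 11; 3; 8; 5; 13; 7;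
      14; 6; 4; 12; 8; 3; 7; 8; 4; 3; 0; 11; 10; 6; 1; 9; 2; 1; 10; 4; 3; 0; 11; 13; 8; 4; 5;
      7; 10; 14; 1; 6; 5; 10; 14; 3; 11; 15; 13; 12; 9; 9; 0; 14; 2; 12; 2; 7; 14; 13; 1; 8; 6;
      10; 11; 1; 7; 11; 9; 2; 1; 4; 5; 2; 13; 15; 12; 6; 0; 5; 4; 7; 5; 7; 8; 9; 3];
  [:: 9; 7; 2; 5; 4; 12; 11; 0; 1; 3; 14; 10; 6; 13; 8; 8; 4; 1; 3; 14; 10; 6; 15; 5; 12; 0;
      13; 2; 11; 6; 13; 1; 2; 3; 12; 10; 9; 15; 5; 4; 0; 14; 10; 14; 9; 0; 12; 8; 3; 11; 13; 7;
      1; 5; 7; 9; 0; 4; 12; 2; 6; 14; 11; 3; 8; 2; 15; 6; 0; 11; 8; 12; 13; 9; 10; 5; 7; 4; 8;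
      3; 11; 0; 10; 6; 1; 13; 14; 7; 6; 4; 12; 8; 3; 9; 8; 13; 5; 4; 10; 7; 14; 1; 1; 2; 10; 4;
      3; 11; 0; 6; 11; 15; 13; 12; 9; 10; 5; 3; 14; 2; 14; 7; 13; 1; 0; 9; 14; 2; 12; 8; 1; 6;
      11; 10; 7; 5; 2; 13; 9; 11; 2; 1; 4; 6; 0; 15; 12; 5; 4; 7; 5; 7; 8; 3; 9];
  [:: 6; 4; 2; 0; 9; 14; 10; 11; 3; 8; 12; 1; 7; 13; 5; 8; 7; 2; 13; 1; 9; 10; 12; 3; 5; 15; 4;
      0; 14; 9; 10; 14; 3; 1; 12; 5; 15; 6; 13; 0; 2; 11; 11; 12; 4; 5; 1; 0; 3; 14; 6; 10; 8;
      13; 5; 15; 9; 7; 14; 13; 4; 6; 8; 12; 3; 2; 8; 4; 7; 0; 11; 3; 10; 6; 1; 7; 0; 6; 13; 12;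
      8; 11; 10; 9; 4; 0; 2; 12; 14; 6; 3; 11; 8; 6; 2; 13; 14; 3; 5; 10; 1; 8; 15; 11; 13; 9;
      12; 9; 4; 10; 0; 11; 3; 7; 10; 4; 5; 14; 1; 8; 9; 10; 11; 6; 0; 2; 1; 2; 14; 12; 7; 14;
      1; 13; 11; 12; 15; 9; 5; 6; 0; 7; 2; 4; 1; 2; 13; 4; 5; 5; 7; 7; 9; 3; 8];
  [:: 6; 7; 8; 13; 2; 1; 10; 9; 3; 12; 5; 15; 4; 0; 14; 2; 4; 9; 0; 10; 14; 3; 11; 12; 8; 7; 1;
      13; 5; 9; 12; 11; 5; 4; 0; 1; 14; 3; 10; 6; 8; 13; 14; 10; 1; 3; 5; 12; 6; 15; 13; 0; 2;
      11; 5; 2; 4; 8; 7; 11; 0; 3; 10; 6; 1; 9; 15; 14; 7; 13; 4; 6; 8; 12; 3; 7; 4; 0; 2; 12;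
      14; 6; 3; 11; 8; 0; 6; 12; 13; 11; 8; 10; 9; 6; 8; 1; 15; 11; 13; 9; 12; 13; 2; 3; 14;
      10; 5; 9; 10; 7; 5; 4; 14; 1; 4; 10; 11; 0; 3; 8; 2; 0; 1; 9; 11; 10; 6; 14; 7; 1; 13; 2;
      14; 12; 5; 9; 6; 0; 11; 12; 15; 7; 2; 13; 2; 4; 1; 4; 5; 5; 7; 7; 3; 9; 8];
  [:: 7; 15; 2; 3; 4; 14; 1; 8; 11; 13; 12; 6; 0; 9; 10; 9; 13; 1; 5; 10; 12; 2; 0; 4; 11; 3;
      6; 14; 8; 5; 10; 11; 0; 2; 6; 4; 13; 7; 14; 3; 12; 8; 14; 12; 9; 3; 4; 0; 11; 7; 8; 10;
      6; 1; 9; 4; 8; 0; 5; 13; 15; 6; 12; 11; 2; 2; 7; 3; 14; 1; 0; 8; 13; 6; 10; 6; 13; 8; 1;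
      7; 12; 11; 3; 5; 15; 12; 5; 3; 9; 10; 4; 0; 14; 9; 0; 10; 4; 5; 11; 14; 12; 2; 2; 5; 10;
      13; 1; 7; 14; 8; 7; 14; 6; 10; 11; 4; 10; 3; 15; 1; 9; 2; 1; 3; 0; 11; 13; 8; 1; 14; 6;
      12; 9; 13; 5; 4; 9; 7; 2; 15; 7; 12; 5; 2; 6; 11; 4; 1; 5; 13; 0; 8; 3; 9; 7];
  [:: 7; 13; 9; 5; 1; 10; 12; 2; 0; 4; 11; 3; 6; 14; 8; 2; 15; 4; 3; 1; 14; 11; 8; 12; 13; 6;
      0; 9; 10; 5; 12; 14; 9; 4; 3; 11; 0; 7; 8; 10; 6; 1; 11; 10; 2; 0; 6; 4; 13; 14; 7; 3;
      12; 8; 9; 7; 2; 3; 14; 0; 1; 13; 8; 10; 6; 8; 4; 0; 13; 5; 6; 15; 12; 11; 2; 6; 15; 5;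
      12; 3; 10; 9; 4; 0; 14; 8; 13; 7; 1; 12; 3; 11; 5; 2; 5; 10; 13; 1; 14; 7; 0; 9; 4; 10;
      11; 5; 12; 14; 2; 8; 10; 4; 15; 3; 1; 7; 14; 6; 11; 10; 9; 8; 13; 1; 14; 1; 2; 3; 11; 0;
      6; 12; 9; 13; 5; 2; 15; 4; 9; 7; 2; 6; 7; 12; 5; 5; 13; 11; 4; 1; 0; 8; 9; 3; 7];
  [:: 5; 15; 9; 0; 2; 10; 11; 4; 6; 7; 14; 13; 3; 8; 12; 2; 13; 9; 14; 12; 0; 11; 3; 4; 8; 7;
      6; 10; 1; 7; 14; 1; 3; 4; 13; 12; 8; 11; 0; 6; 10; 9; 10; 1; 5; 2; 12; 4; 0; 3; 11; 14;
      6; 8; 6; 4; 2; 1; 7; 13; 8; 11; 3; 12; 5; 8; 7; 12; 5; 15; 9; 10; 3; 0; 4; 14; 9; 5; 13;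
      0; 12; 15; 6; 2; 11; 3; 14; 1; 0; 8; 13; 6; 10; 8; 9; 14; 7; 10; 11; 6; 0; 2; 3; 15; 4;
      10; 1; 5; 11; 10; 4; 12; 14; 2; 10; 5; 1; 13; 7; 14; 6; 2; 13; 1; 8; 9; 12; 13; 9; 3; 0;
      11; 1; 14; 4; 12; 7; 5; 6; 2; 5; 9; 7; 15; 2; 11; 5; 0; 1; 4; 13; 3; 9; 8; 7];
  [:: 5; 13; 2; 9; 12; 14; 11; 0; 4; 3; 8; 7; 6; 10; 1; 9; 15; 2; 0; 11; 10; 4; 6; 14; 7; 13;
      3; 8; 12; 7; 10; 5; 1; 2; 12; 4; 0; 3; 11; 14; 6; 8; 1; 14; 4; 3; 12; 13; 11; 8; 0; 6;
      10; 9; 6; 7; 8; 5; 12; 15; 10; 9; 3; 0; 4; 14; 2; 4; 7; 1; 8; 13; 3; 11; 12; 5; 9; 14; 3;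
      0; 1; 8; 13; 10; 6; 13; 5; 0; 12; 6; 15; 2; 11; 8; 2; 0; 15; 3; 10; 4; 1; 9; 14; 7; 11;
      10; 6; 10; 5; 1; 13; 14; 7; 11; 5; 4; 10; 12; 14; 2; 6; 8; 1; 9; 12; 13; 13; 2; 9; 14; 1;
      3; 11; 0; 6; 2; 4; 12; 7; 5; 5; 15; 2; 9; 7; 5; 0; 11; 13; 1; 4; 9; 3; 8; 7]].

Lemma sqs20_cert : mcDSQS_cert 19 9 sqs20_blocks sqs20_colorings.
Proof. by vm_compute. Qed.

Lemma sqs26_cert : mcDSQS_cert 25 12 sqs26_blocks sqs26_colorings.
Proof. by vm_compute. Qed.

Lemma sqs32_cert : mcDSQS_cert 31 15 sqs32_blocks sqs32_colorings.
Proof. by vm_compute. Qed.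

Theorem lemma3p4 : forall v : nat, v \in [:: 20; 26; 32] ->
  exists B : {set {set 'I_v}}, mcDSQS B.
Proof.
move=> v; rewrite !inE => /or3P [] /eqP ->.
- by exists (blocks_of 20 sqs20_blocks); apply: mcDSQS_of_cert sqs20_cert.
- by exists (blocks_of 26 sqs26_blocks); apply: mcDSQS_of_cert sqs26_cert.
- by exists (blocks_of 32 sqs32_blocks); apply: mcDSQS_of_cert sqs32_cert.
Qed.
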